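(* (i) $\mathsf{Seq}$ is a sequential theory, i.e. $\mathsf{Seq}$ directly interprets the adjunctive set theory $\mathsf{AST}$. (ii) $\mathsf{Seq}$ is essentially undecidable.
   Context: $\mathsf{Seq}$ is the theory in the language $\{e,\vdash,\circ\}$ ($e$ constant, $\vdash$ and $\circ$ binary functions) with axioms: ($\mathsf{Seq}_1$) $\forall xy[x\vdash y\neq e]$; ($\mathsf{Seq}_2$) $\forall x_1x_2y_1y_2[x_1\vdash x_2=y_1\vdash y_2\rightarrow(x_1=y_1\wedge x_2=y_2)]$; ($\mathsf{Seq}_3$) $\forall x[x\circ e=x]$; ($\mathsf{Seq}_4$) $\forall xyz[x\circ(y\vdash z)=(x\circ y)\vdash z]$; ($\mathsf{Seq}_5$) $\forall x[x=e\vee\exists yz[x=y\vdash z]]$. $\mathsf{AST}$ is the theory in the language $\{\in\}$ with axioms $\exists y\forall x[x\notin y]$ (empty set) and $\forall xy\exists z\forall u[u\in z\leftrightarrow(u\in x\vee u=y)]$ (adjunction). A theory is called sequential if it directly interprets $\mathsf{AST}$ (an interpretation is direct if the domain is unrestricted and identity is translated as identity). *)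

From Stdlib Require Import List Arith Fin.
Import ListNotations.

Record sig := {
  Fn : Type; fn_ar : Fn -> nat;
  Rl : Type; rl_ar : Rl -> nat }.

Inductive term (S : sig) : Type :=
| tvar : nat -> term S
| tapp : forall f : Fn S, (Fin.t (fn_ar S f) -> term S) -> term S.
Arguments tvar {S} n.
Arguments tapp {S} f args.

Inductive form (S : sig) : Type :=
| fbot : form S
| feq  : term S -> term S -> form S
| frel : forall R : Rl S, (Fin.t (rl_ar S R) -> term S) -> form S
| fimp : form S -> form S -> form S
| fall : form S -> form S.             (* binds variable 0 *)
Arguments fbot {S}.
Arguments feq {S} s t.
Arguments frel {S} R args.
Arguments fimp {S} phi psi.
Arguments fall {S} phi.

Section Syntax.
Variable L : sig.

Definition fneg (p : form L) : form L := fimp p fbot.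
Definition for_ (p q : form L) : form L := fimp (fneg p) q.
Definition fand (p q : form L) : form L := fneg (fimp p (fneg q)).
Definition fiff (p q : form L) : form L := fand (fimp p q) (fimp q p).
Definition fex (p : form L) : form L := fneg (fall (fneg p)).

Fixpoint tsubst (sigma : nat -> term L) (t : term L) : term L :=
  match t with
  | tvar n => sigma n
  | tapp f args => tapp f (fun i => tsubst sigma (args i))
  end.

Definition shift : nat -> term L := fun k => tvar (S k).
Definition up (sigma : nat -> term L) : nat -> term L :=
  fun n => match n with 0 => tvar 0 | S m => tsubst shift (sigma m) end.
Definition inst (t : term L) : nat -> term L :=
  fun n => match n with 0 => t | S m => tvar m end.

Fixpoint fsubst (sigma : nat -> term L) (p : form L) : form L :=
  match p with
  | fbot => fbot
  | feq s t => feq (tsubst sigma s) (tsubst sigma t)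
  | frel R args => frel R (fun i => tsubst sigma (args i))
  | fimp p q => fimp (fsubst sigma p) (fsubst sigma q)
  | fall p => fall (fsubst (up sigma) p)
  end.

Fixpoint tbounded (n : nat) (t : term L) : Prop :=
  match t with
  | tvar k => k < n
  | tapp f args => forall i, tbounded n (args i)
  end.
Fixpoint fbounded (n : nat) (p : form L) : Prop :=
  match p with
  | fbot => True
  | feq s t => tbounded n s /\ tbounded n t
  | frel R args => forall i, tbounded n (args i)
  | fimp p q => fbounded n p /\ fbounded n q
  | fall p => fbounded (S n) p
  end.
Definition sentence (p : form L) : Prop := fbounded 0 p.

Inductive prv : list (form L) -> form L -> Prop :=
| P_ax   G p : In p G -> prv G p
| P_impI G p q : prv (p :: G) q -> prv G (fimp p q)
| P_impE G p q : prv G (fimp p q) -> prv G p -> prv G q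
| P_allI G p : prv (map (fsubst shift) G) p -> prv G (fall p)
| P_allE G p t : prv G (fall p) -> prv G (fsubst (inst t) p)
| P_dn   G p : prv G (fneg (fneg p)) -> prv G p
| P_refl G t : prv G (feq t t)
| P_leib G p s t : prv G (feq s t) -> prv G (fsubst (inst s) p) ->
                   prv G (fsubst (inst t) p).

Definition theory := form L -> Prop.
Definition proves (T : theory) (p : form L) : Prop :=
  exists G, (forall q, In q G -> T q) /\ prv G p.
Definition consistent (T : theory) : Prop := ~ proves T fbot.
End Syntax.

Arguments fneg {L} p.
Arguments for_ {L} p q.
Arguments fand {L} p q.
Arguments fiff {L} p q.
Arguments fex {L} p.
Arguments fsubst {L} sigma p.
Arguments tsubst {L} sigma t.
Arguments fbounded {L} n p.
Arguments sentence {L} p.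
Arguments proves {L} T p.
Arguments consistent {L} T.

Inductive SeqFn := Fe | Fcons | Fconc.
Definition SeqSig : sig := {|
  Fn := SeqFn;
  fn_ar := fun f => match f with Fe => 0 | _ => 2 end;
  Rl := Empty_set;
  rl_ar := fun r => match r with end |}.

Definition args2 {S : sig} (s t : term S) : Fin.t 2 -> term S :=
  fun i => match i in Fin.t n return term S with
           | Fin.F1 => s | Fin.FS _ => t end.

Definition te : term SeqSig := tapp (S := SeqSig) Fe (fun i => Fin.case0 _ i).
Definition tcons (s t : term SeqSig) : term SeqSig :=
  tapp (S := SeqSig) Fcons (args2 s t).
Definition tconc (s t : term SeqSig) : term SeqSig :=
  tapp (S := SeqSig) Fconc (args2 s t).
Definition v (n : nat) : term SeqSig := tvar n.

Definition Seq1 : form SeqSig :=           (* forall x y, x |- y <> e *)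
  fall (fall (fneg (feq (tcons (v 1) (v 0)) te))).
Definition Seq2 : form SeqSig :=           (* x1 |- x2 = y1 |- y2 -> x1 = y1 /\ x2 = y2 *)
  fall (fall (fall (fall
    (fimp (feq (tcons (v 3) (v 2)) (tcons (v 1) (v 0)))
          (fand (feq (v 3) (v 1)) (feq (v 2) (v 0))))))).
Definition Seq3 : form SeqSig :=           (* x o e = x *)
  fall (feq (tconc (v 0) te) (v 0)).
Definition Seq4 : form SeqSig :=           (* x o (y |- z) = (x o y) |- z *)
  fall (fall (fall
    (feq (tconc (v 2) (tcons (v 1) (v 0))) (tcons (tconc (v 2) (v 1)) (v 0))))).
Definition Seq5 : form SeqSig :=           (* x = e \/ exists y z, x = y |- z *)
  fall (for_ (feq (v 0) te) (fex (fex (feq (v 2) (tcons (v 1) (v 0)))))).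

Definition SeqAx : theory SeqSig :=
  fun p => p = Seq1 \/ p = Seq2 \/ p = Seq3 \/ p = Seq4 \/ p = Seq5.

Definition ASTSig : sig := {|
  Fn := Empty_set; fn_ar := fun f => match f with end;
  Rl := unit; rl_ar := fun _ => 2 |}.          (* the single binary relation "in" *)

Definition mem (a b : nat) : form ASTSig :=
  frel (S := ASTSig) tt (args2 (tvar a) (tvar b)).

Definition AST_empty : form ASTSig :=        (* exists y forall x, x notin y *)
  fex (fall (fneg (mem 0 1))).
Definition AST_adj : form ASTSig :=          (* forall x y exists z forall u, u in z <-> u in x \/ u = y *)
  fall (fall (fex (fall
    (fiff (mem 0 1) (for_ (mem 0 3) (feq (tvar 0) (tvar 2))))))).
Definition ASTAx : theory ASTSig := fun p => p = AST_empty \/ p = AST_adj.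

(* A direct interpretation is given by a formula delta(x0,x1) (free variables
   among 0,1) translating "x0 in x1"; the domain is unrestricted, identity is
   translated as identity, and the translation commutes with the logical
   connectives and quantifiers. *)
Definition tr_term (t : term ASTSig) : term SeqSig :=
  match t with
  | tvar n => tvar n
  | tapp f _ => match f with end
  end.

Fixpoint tr (delta : form SeqSig) (p : form ASTSig) : form SeqSig :=
  match p with
  | fbot => fbot
  | feq s t => feq (tr_term s) (tr_term t)
  | frel R args =>
      fsubst (fun n => match n with
                       | 0 => tr_term (args Fin.F1)
                       | 1 => tr_term (args (Fin.FS Fin.F1))
                       | _ => tvar 0 end) delta
  | fimp p q => fimp (tr delta p) (tr delta q)
  | fall p => fall (tr delta p)
  end.

Definition directly_interprets_AST (T : theory SeqSig) : Prop :=
  exists delta : form SeqSig, fbounded 2 delta /\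
    forall A, ASTAx A -> proves T (tr delta A).

Definition sequential (T : theory SeqSig) : Prop := directly_interprets_AST T.

Inductive rf : Type :=
| rZero | rSucc | rProj (i : nat)
| rComp (g : rf) (hs : list rf)
| rPrec (g h : rf)
| rMu (g : rf).

Inductive reval : rf -> list nat -> nat -> Prop :=
| ev_zero xs : reval rZero xs 0
| ev_succ x xs : reval rSucc (x :: xs) (S x)
| ev_proj i xs : reval (rProj i) xs (nth i xs 0)
| ev_comp g hs xs ys y : revals hs xs ys -> reval g ys y -> reval (rComp g hs) xs y
| ev_prec0 g h xs y : reval g xs y -> reval (rPrec g h) (0 :: xs) y
| ev_precS g h n xs y z : reval (rPrec g h) (n :: xs) y -> reval h (n :: y :: xs) z ->
    reval (rPrec g h) (S n :: xs) z
| ev_mu g xs n : reval g (n :: xs) 0 ->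
    (forall m, m < n -> exists k, reval g (m :: xs) (S k)) -> reval (rMu g) xs n
with revals : list rf -> list nat -> list nat -> Prop :=
| evs_nil xs : revals [] xs []
| evs_cons h hs xs y ys : reval h xs y -> revals hs xs ys -> revals (h :: hs) xs (y :: ys).

Definition npair (a b : nat) : nat := (a + b) * (a + b + 1) / 2 + b.
Definition enc_list (l : list nat) : nat := fold_right (fun x acc => S (npair x acc)) 0 l.
Fixpoint fin_list (n : nat) : (Fin.t n -> nat) -> list nat :=
  match n with
  | 0 => fun _ => []
  | S m => fun g => g Fin.F1 :: fin_list m (fun i => g (Fin.FS i))
  end.

Definition seqfn_code (f : SeqFn) : nat := match f with Fe => 0 | Fcons => 1 | Fconc => 2 end.

Fixpoint tcode (t : term SeqSig) : nat :=
  match t with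
  | tvar n => npair 0 n
  | tapp f args => npair 1 (npair (seqfn_code f)
                     (enc_list (fin_list _ (fun i => tcode (args i)))))
  end.

Fixpoint fcode (p : form SeqSig) : nat :=
  match p with
  | fbot => npair 0 0
  | feq s t => npair 1 (npair (tcode s) (tcode t))
  | frel R _ => match R with end
  | fimp p q => npair 2 (npair (fcode p) (fcode q))
  | fall p => npair 3 (fcode p)
  end.

Definition decidable_theory (T : theory SeqSig) : Prop :=
  exists c : rf, forall p : form SeqSig, sentence p ->
    (reval c [fcode p] 1 <-> proves T p) /\ (reval c [fcode p] 0 <-> ~ proves T p).

Definition essentially_undecidable (T0 : theory SeqSig) : Prop :=
  forall T : theory SeqSig,
    (forall p, T p -> sentence p) ->
    (forall p, T0 p -> proves T p) ->
    consistent T -> ~ decidable_theory T.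

(* (i) Read [x in y] as "y end-extends a sequence whose last entry is x", i.e.
   exists a w, y = (a |- x) o w.  Then e has no elements by Seq1, Seq3-Seq5, and the elements
   of x |- y are those of x together with y.
   (ii) Closed terms of Seq are binary trees, and Seq proves enough about them to speak about
   runs of a deterministic tree-rewriting machine: distinct trees are provably distinct, one
   step is a formula, and "the sequence s, read backwards from the configuration I, is a run
   ending in H" is expressible since o locates consecutive entries of s.  If the machine goes
   from I to H, the actual run witnesses this formula; if it halts elsewhere without passing
   H, Seq refutes it, because Seq2 and Seq5 force any stored run to agree with the actual one
   entry by entry.  The machine runs every partial recursive function, so a program c deciding
   a consistent extension T leads to a diagonal contradiction: let q compute
   m |-> c(code of "the machine started on m reaches output 0") and take m the code of q.  If
   T proves this sentence, c outputs 1, the machine halts with 1 and Seq refutes it; otherwise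
   c outputs 0, the machine reaches output 0 and Seq proves it. *)

From Pilot Require Import Defs.
From Stdlib Require Import List Arith Lia Bool Relations FunctionalExtensionality Classical.
Import ListNotations.

Section Substitution.
Context {Sg : sig}.
Local Notation tm := (term Sg).
Local Notation fm := (form Sg).
Local Notation up := (up Sg).
Local Notation inst := (inst Sg).
Local Notation shift := (shift Sg).

Fixpoint term_nested_ind (P : tm -> Prop) (Hv : forall n, P (tvar n))
  (Ha : forall f args, (forall i, P (args i)) -> P (tapp f args)) (t : tm) : P t :=
  match t with
  | tvar n => Hv n
  | tapp f args => Ha f args (fun i => term_nested_ind P Hv Ha (args i))
  end.

Lemma tsubst_ext (s t : nat -> tm) u : (forall n, s n = t n) -> tsubst s u = tsubst t u.
Proof. intros E; apply functional_extensionality in E; now subst. Qed.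

Lemma fsubst_ext (s t : nat -> tm) p : (forall n, s n = t n) -> fsubst s p = fsubst t p.
Proof. intros E; apply functional_extensionality in E; now subst. Qed.

Lemma tsubst_comp (s t : nat -> tm) u :
  tsubst s (tsubst t u) = tsubst (fun n => tsubst s (t n)) u.
Proof.
  induction u using term_nested_ind; simpl; auto.
  f_equal; apply functional_extensionality; auto.
Qed.

Lemma tsubst_id u : tsubst (@tvar Sg) u = u.
Proof.
  induction u using term_nested_ind; simpl; auto.
  f_equal; apply functional_extensionality; auto.
Qed.

Lemma up_comp (s t : nat -> tm) :
  (fun n => tsubst (up s) (up t n)) = up (fun n => tsubst s (t n)).
Proof.
  apply functional_extensionality; intros [|n]; simpl; auto.
  now rewrite !tsubst_comp.
Qed.

Lemma up_id : up (@tvar Sg) = @tvar Sg.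
Proof. apply functional_extensionality; intros [|n]; reflexivity. Qed.

Lemma fsubst_comp (s1 s2 : nat -> tm) p :
  fsubst s1 (fsubst s2 p) = fsubst (fun n => tsubst s1 (s2 n)) p.
Proof.
  revert s1 s2; induction p; intros s1 s2; simpl; f_equal; auto using tsubst_comp.
  - apply functional_extensionality; intro; apply tsubst_comp.
  - now rewrite IHp, up_comp.
Qed.

Lemma fsubst_id p : fsubst (@tvar Sg) p = p.
Proof.
  induction p; simpl; f_equal; auto using tsubst_id.
  - apply functional_extensionality; intro; apply tsubst_id.
  - now rewrite up_id.
Qed.

Lemma tsubst_shift_inst u w : tsubst (inst u) (tsubst shift w) = w.
Proof. rewrite tsubst_comp; apply tsubst_id. Qed.

Lemma fsubst_shift_inst u p : fsubst (inst u) (fsubst shift p) = p.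
Proof. rewrite fsubst_comp; apply fsubst_id. Qed.

Lemma inst_up s t :
  (fun n => tsubst s (inst t n)) = (fun n => tsubst (inst (tsubst s t)) (up s n)).
Proof.
  apply functional_extensionality; intros [|n]; simpl; auto.
  now rewrite tsubst_shift_inst.
Qed.

Lemma tsubst_bounded n (s : nat -> tm) t :
  tbounded Sg n t -> (forall i, i < n -> s i = tvar i) -> tsubst s t = t.
Proof.
  induction t using term_nested_ind; simpl; intros Hb Hs; auto.
  f_equal; apply functional_extensionality; auto.
Qed.

Lemma fsubst_bounded (p : fm) : forall n (s : nat -> tm),
  fbounded n p -> (forall i, i < n -> s i = tvar i) -> fsubst s p = p.
Proof.
  induction p; simpl; intros n s Hb Hs; auto.
  - destruct Hb; f_equal; eapply tsubst_bounded; eauto.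
  - f_equal; apply functional_extensionality; intro; eapply tsubst_bounded; eauto.
  - destruct Hb; f_equal; eauto.
  - f_equal; apply (IHp (S n)); auto.
    intros [|i] Hi; simpl; auto. now rewrite Hs by lia.
Qed.

Lemma fsubst_sentence (p : fm) s : sentence p -> fsubst s p = p.
Proof. intro H; eapply fsubst_bounded; eauto; lia. Qed.

Lemma tbounded_tsubst t : forall m n (s : nat -> tm), tbounded Sg m t ->
  (forall i, i < m -> tbounded Sg n (s i)) -> tbounded Sg n (tsubst s t).
Proof. induction t using term_nested_ind; simpl; eauto. Qed.
End Substitution.

Ltac solve_incl := let x := fresh in let Hx := fresh in intros x Hx; simpl in *; tauto.

Section Deduction.
Context {Sg : sig}.
Local Notation tm := (term Sg).
Local Notation fm := (form Sg).
Local Notation up := (up Sg).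
Local Notation inst := (inst Sg).
Local Notation shift := (shift Sg).
Local Notation prv := (prv Sg).

Lemma prv_weaken G p : prv G p -> forall G', incl G G' -> prv G' p.
Proof.
  induction 1; intros G' Hi.
  - apply P_ax; auto.
  - apply P_impI, IHprv, incl_cons; [now left | now apply incl_tl].
  - eapply P_impE; eauto.
  - apply P_allI, IHprv, incl_map, Hi.
  - apply P_allE; auto.
  - apply P_dn; auto.
  - apply P_refl.
  - eapply P_leib; eauto.
Qed.

Lemma prv_fsubst G p : prv G p -> forall sg, prv (map (fsubst sg) G) (fsubst sg p).
Proof.
  induction 1; intros sg; simpl.
  - apply P_ax, in_map; auto.
  - apply P_impI, IHprv.
  - eapply P_impE; [apply IHprv1 | apply IHprv2].
  - apply P_allI. specialize (IHprv (up sg)). rewrite !map_map in IHprv |- *.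
    erewrite map_ext; [exact IHprv|]. intro q; now rewrite !fsubst_comp.
  - specialize (IHprv sg). apply P_allE with (t := tsubst sg t) in IHprv.
    rewrite !fsubst_comp in IHprv |- *. now rewrite inst_up.
  - apply P_dn, IHprv.
  - apply P_refl.
  - specialize (IHprv1 sg); specialize (IHprv2 sg).
    rewrite fsubst_comp, inst_up, <- fsubst_comp in IHprv2 |- *. eapply P_leib; eauto.
Qed.

Lemma prv_hd G p : prv (p :: G) p.
Proof. apply P_ax; now left. Qed.

Lemma prv_cons G p q : prv G p -> prv (q :: G) p.
Proof. intro H; eapply prv_weaken; eauto; solve_incl. Qed.

Lemma prv_cut G p q : prv G p -> prv (p :: G) q -> prv G q.
Proof. intros; eapply P_impE; [apply P_impI|]; eauto. Qed.

Lemma prv_exfalso G p : prv G fbot -> prv G p.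
Proof. intro H; apply P_dn, P_impI, prv_cons, H. Qed.

Lemma prv_byContra G p : prv (fneg p :: G) fbot -> prv G p.
Proof. intro H; apply P_dn, P_impI, H. Qed.

Lemma prv_andI G p q : prv G p -> prv G q -> prv G (fand p q).
Proof.
  intros Hp Hq. apply P_impI.
  eapply P_impE; [eapply P_impE; [apply prv_hd|] |]; apply prv_cons; auto.
Qed.

Lemma prv_andE1 G p q : prv G (fand p q) -> prv G p.
Proof.
  intro H. apply prv_byContra. eapply P_impE; [apply prv_cons, H|].
  apply P_impI, prv_exfalso. eapply P_impE; [apply prv_cons, prv_hd | apply prv_hd].
Qed.

Lemma prv_andE2 G p q : prv G (fand p q) -> prv G q.
Proof.
  intro H. apply prv_byContra. eapply P_impE; [apply prv_cons, H|].
  apply P_impI, prv_cons, prv_hd.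
Qed.

Lemma prv_orI1 G p q : prv G p -> prv G (for_ p q).
Proof. intro H. apply P_impI, prv_exfalso. eapply P_impE; [apply prv_hd | apply prv_cons, H]. Qed.

Lemma prv_orI2 G p q : prv G q -> prv G (for_ p q).
Proof. intro H; apply P_impI, prv_cons, H. Qed.

Lemma prv_orE G p q r : prv G (for_ p q) -> prv (p :: G) r -> prv (q :: G) r -> prv G r.
Proof.
  intros H H1 H2. apply prv_byContra.
  assert (Hnp : prv (fneg r :: G) (fneg p)).
  { apply P_impI. eapply P_impE; [apply prv_cons, prv_hd|].
    eapply prv_weaken; [apply H1 | solve_incl]. }
  assert (Hq : prv (fneg r :: G) q) by (eapply P_impE; [apply prv_cons, H | exact Hnp]).
  eapply P_impE; [apply prv_hd|]. eapply prv_cut; [exact Hq|].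
  eapply prv_weaken; [apply H2 | solve_incl].
Qed.

Lemma prv_exI G p t : prv G (fsubst (inst t) p) -> prv G (fex p).
Proof.
  intro H. apply P_impI. eapply P_impE; [apply (P_allE _ _ (fneg p) t), prv_hd|].
  apply prv_cons, H.
Qed.

Lemma prv_exE G p q :
  prv G (fex p) -> prv (p :: map (fsubst shift) G) (fsubst shift q) -> prv G q.
Proof.
  intros H1 H2. apply prv_byContra. eapply P_impE; [apply prv_cons, H1|].
  apply P_allI, P_impI. eapply P_impE; [apply prv_cons, prv_hd|].
  eapply prv_weaken; [apply H2 | solve_incl].
Qed.

Lemma prv_eq_sym G s t : prv G (feq s t) -> prv G (feq t s).
Proof.
  intro H. assert (Hl := P_leib _ G (feq (tvar 0) (tsubst shift s)) s t H).
  simpl in Hl. rewrite !tsubst_shift_inst in Hl. apply Hl, P_refl.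
Qed.

Lemma prv_eq_trans G s t u : prv G (feq s t) -> prv G (feq t u) -> prv G (feq s u).
Proof.
  intros H1 H2.
  assert (Hl := P_leib _ G (feq (tvar 0) (tsubst shift u)) t s (prv_eq_sym _ _ _ H1)).
  simpl in Hl. rewrite !tsubst_shift_inst in Hl. auto.
Qed.

Lemma prv_eq_congr G a a' C :
  prv G (feq a a') -> prv G (feq (tsubst (inst a) C) (tsubst (inst a') C)).
Proof.
  intro H. assert (Hl := P_leib _ G (feq (tsubst shift (tsubst (inst a) C)) C) a a' H).
  simpl in Hl. rewrite !tsubst_shift_inst in Hl. apply Hl, P_refl.
Qed.

Lemma prv_app_hyps A : forall G q, prv (A ++ G) q -> (forall a, In a A -> prv G a) -> prv G q.
Proof.
  induction A as [|a A IH]; simpl; intros G q H HA; auto.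
  eapply P_impE; [apply IH|].
  - apply P_impI, H.
  - intros; apply HA; auto.
  - apply HA; auto.
Qed.

Definition scons (t : tm) (s : nat -> tm) : nat -> tm :=
  fun n => match n with 0 => t | S m => s m end.

Fixpoint sconsl (ws : list tm) (s : nat -> tm) : nat -> tm :=
  match ws with [] => s | w :: ws => scons w (sconsl ws s) end.

Fixpoint upn (k : nat) (s : nat -> tm) : nat -> tm :=
  match k with 0 => s | S k => up (upn k s) end.

Definition liftn (k : nat) (t : tm) : tm := tsubst (fun i => tvar (i + k)) t.

Fixpoint exn (k : nat) (p : fm) : fm := match k with 0 => p | S k => exn k (fex p) end.

Fixpoint Disj (ps : list fm) : fm :=
  match ps with [] => fbot | p :: ps => for_ p (Disj ps) end.

Lemma scons_up t s : (fun n => tsubst (inst t) (up s n)) = scons t s.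
Proof. apply functional_extensionality; intros [|n]; simpl; auto using tsubst_shift_inst. Qed.

Lemma prv_allE_at G s p t : prv G (fsubst s (fall p)) -> prv G (fsubst (scons t s) p).
Proof.
  intro H; simpl in H. apply (P_allE _ _ _ t) in H. now rewrite fsubst_comp, scons_up in H.
Qed.

Lemma prv_exI_at G s p t : prv G (fsubst (scons t s) p) -> prv G (fsubst s (fex p)).
Proof.
  intro H. change (prv G (fex (fsubst (up s) p))).
  apply (prv_exI _ _ t). now rewrite fsubst_comp, scons_up.
Qed.

Lemma upn_lt k s i : i < k -> upn k s i = tvar i.
Proof.
  revert i; induction k; intros [|i] H; simpl; try lia; auto.
  unfold Defs.up; rewrite IHk by lia; reflexivity.
Qed.

Lemma liftn_0 t : liftn 0 t = t.
Proof.
  unfold liftn; rewrite <- (tsubst_id t) at 2; apply tsubst_ext; intro n; now rewrite Nat.add_0_r.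
Qed.

Lemma upn_ge k s i : upn k s (i + k) = liftn k (s i).
Proof.
  induction k; simpl; [now rewrite liftn_0, Nat.add_0_r|].
  rewrite <- plus_n_Sm; simpl. rewrite IHk. unfold liftn; rewrite tsubst_comp.
  apply tsubst_ext; intro n; simpl. unfold Defs.shift; f_equal; lia.
Qed.

Lemma upn_liftn k s t : tsubst (upn k s) (liftn k t) = liftn k (tsubst s t).
Proof.
  unfold liftn at 1; rewrite tsubst_comp; unfold liftn; rewrite tsubst_comp.
  apply tsubst_ext; intro n; apply upn_ge.
Qed.

Lemma tsubst_scons_liftn t s k u : tsubst (scons t s) (liftn (S k) u) = tsubst s (liftn k u).
Proof.
  unfold liftn; rewrite !tsubst_comp; apply tsubst_ext; intro n; now rewrite <- plus_n_Sm.
Qed.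

Lemma sconsl_nth ws s i : i < length ws -> sconsl ws s i = nth i ws (tvar 0).
Proof. revert i; induction ws; simpl; intros [|i] H; simpl; try lia; auto with arith. Qed.

Lemma fsubst_exn k : forall s p, fsubst s (exn k p) = exn k (fsubst (upn k s) p).
Proof. induction k; intros s p; simpl; auto; now rewrite IHk. Qed.

Lemma fsubst_Disj s ps : fsubst s (Disj ps) = Disj (map (fsubst s) ps).
Proof. induction ps as [|p ps IH]; simpl; auto. now rewrite IH. Qed.

Lemma prv_exnI G k : forall p s ws, length ws = k ->
  prv G (fsubst (sconsl ws s) p) -> prv G (fsubst s (exn k p)).
Proof.
  induction k; intros p s [|w ws] Hl H; simpl in *; try discriminate; auto.
  apply IHk with (ws := ws); auto. now apply prv_exI_at with (t := w).
Qed.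

Lemma prv_exnE k : forall G p q, prv G (exn k p) ->
  prv (p :: map (fsubst (fun i => tvar (i + k))) G) (fsubst (fun i => tvar (i + k)) q) ->
  prv G q.
Proof.
  induction k; intros G p q H1 H2; simpl in *.
  - assert (E : forall r : fm, fsubst (fun i => tvar (i + 0)) r = r)
      by (intro r; rewrite <- (fsubst_id r) at 2; apply fsubst_ext; intro; now rewrite Nat.add_0_r).
    rewrite E, (map_ext _ (fun x => x)), map_id in H2 by auto. eapply prv_cut; eauto.
  - eapply IHk; [exact H1|]. eapply prv_exE; [apply prv_hd|].
    eapply prv_weaken; [rewrite fsubst_comp; erewrite fsubst_ext; [exact H2|]|].
    + intro n; simpl; unfold Defs.shift; f_equal; lia.
    + intros x [<-|Hx]; [now left | right; right].
      apply in_map_iff in Hx as [y [<- Hy]]. rewrite map_map; apply in_map_iff.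
      exists y; split; auto.
      rewrite fsubst_comp; apply fsubst_ext; intro n; simpl; unfold Defs.shift; f_equal; lia.
Qed.

Lemma prv_DisjI G ps p : In p ps -> prv G p -> prv G (Disj ps).
Proof.
  induction ps; simpl; intros Hi H; [contradiction|].
  destruct Hi as [<-|Hi]; auto using prv_orI1, prv_orI2.
Qed.

Lemma prv_DisjE G ps r : prv G (Disj ps) -> (forall p, In p ps -> prv (p :: G) r) -> prv G r.
Proof.
  revert G; induction ps; simpl; intros G H Hr; [now apply prv_exfalso|].
  eapply prv_orE; eauto. apply IHps; [apply prv_hd|].
  intros p Hp. eapply prv_weaken; [apply Hr; right; exact Hp | solve_incl].
Qed.
Lemma proves_axiom (T : theory Sg) p : T p -> proves T p.
Proof. intro H; exists [p]; split; [intros q [<-|[]]; exact H | apply prv_hd]. Qed.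

Lemma proves_of_prv (T : theory Sg) A q :
  (forall a, In a A -> proves T a) -> prv A q -> proves T q.
Proof.
  intros HA Hq.
  assert (HG : exists G, (forall x, In x G -> T x) /\ forall a, In a A -> prv G a).
  { clear Hq; induction A as [|a A IH]; [exists []; simpl; tauto|].
    destruct IH as [G [HG1 HG2]]; [intros; apply HA; now right|].
    destruct (HA a (or_introl eq_refl)) as [G' [HG'1 HG'2]].
    exists (G ++ G'); split; [intros x Hx; apply in_app_or in Hx as []; auto|].
    intros b [<-|Hb]; eapply prv_weaken; eauto; intros y Hy; apply in_or_app; auto. }
  destruct HG as [G [HG1 HG2]]. exists G; split; auto.
  apply prv_app_hyps with (A := A); auto.
  eapply prv_weaken; [exact Hq|]. intros y Hy; apply in_or_app; auto.
Qed.

Lemma proves_contradiction (T : theory Sg) p : proves T p -> proves T (fneg p) -> ~ consistent T.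
Proof.
  intros [G1 [A1 B1]] [G2 [A2 B2]] HT. apply HT. exists (G1 ++ G2); split.
  - intros x Hx; apply in_app_or in Hx as []; auto.
  - eapply P_impE; eapply prv_weaken; eauto; intros y Hy; apply in_or_app; auto.
Qed.
End Deduction.

Notation tm := (term SeqSig).
Notation fm := (form SeqSig).
Notation sh := (shift SeqSig).
Notation pr := (prv SeqSig).

Lemma args2_map (F : tm -> tm) a b :
  (fun i => F (@args2 SeqSig a b i)) = args2 (F a) (F b).
Proof.
  apply functional_extensionality; intro i.
  apply (Fin.caseS' i (fun i => F (args2 a b i) = args2 (F a) (F b) i)); reflexivity.
Qed.

Lemma tsubst_tcons s a b : tsubst s (tcons a b) = tcons (tsubst s a) (tsubst s b).
Proof. unfold tcons; simpl; f_equal; apply (args2_map (tsubst s)). Qed.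

Lemma tsubst_tconc s a b : tsubst s (tconc a b) = tconc (tsubst s a) (tsubst s b).
Proof. unfold tconc; simpl; f_equal; apply (args2_map (tsubst s)). Qed.

Lemma tsubst_te s : tsubst s te = te.
Proof. unfold te; simpl; f_equal; apply functional_extensionality; intro i; inversion i. Qed.

Lemma tbounded_tcons n a b :
  tbounded SeqSig n a -> tbounded SeqSig n b -> tbounded SeqSig n (tcons a b).
Proof. intros; intro i; apply (Fin.caseS' i (fun i => tbounded SeqSig n (args2 a b i))); auto. Qed.

Lemma tbounded_tconc n a b :
  tbounded SeqSig n a -> tbounded SeqSig n b -> tbounded SeqSig n (tconc a b).
Proof. intros; intro i; apply (Fin.caseS' i (fun i => tbounded SeqSig n (args2 a b i))); auto. Qed.

Lemma tbounded_te n : tbounded SeqSig n te.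
Proof. intro i; inversion i. Qed.

Opaque tcons tconc te.

Hint Rewrite tsubst_tcons tsubst_tconc tsubst_te
  (@tsubst_shift_inst SeqSig) (@fsubst_shift_inst SeqSig) : tsimp.
Ltac tsimp := repeat (simpl; autorewrite with tsimp).
Ltac tsimp_in H := repeat (simpl in H; autorewrite with tsimp in H).

Lemma prv_tcons_congr G a a' b b' :
  pr G (feq a a') -> pr G (feq b b') -> pr G (feq (tcons a b) (tcons a' b')).
Proof.
  intros H1 H2. eapply prv_eq_trans.
  - assert (X := prv_eq_congr _ _ _ (tcons (tvar 0) (tsubst sh b)) H1). tsimp_in X; exact X.
  - assert (X := prv_eq_congr _ _ _ (tcons (tsubst sh a') (tvar 0)) H2). tsimp_in X; exact X.
Qed.

Lemma prv_tconc_congr G a a' b b' :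
  pr G (feq a a') -> pr G (feq b b') -> pr G (feq (tconc a b) (tconc a' b')).
Proof.
  intros H1 H2. eapply prv_eq_trans.
  - assert (X := prv_eq_congr _ _ _ (tconc (tvar 0) (tsubst sh b)) H1). tsimp_in X; exact X.
  - assert (X := prv_eq_congr _ _ _ (tconc (tsubst sh a') (tvar 0)) H2). tsimp_in X; exact X.
Qed.

Definition SeqAxList : list fm := [Seq1; Seq2; Seq3; Seq4; Seq5].

Definition seq_ctx (G : list fm) : Prop := incl SeqAxList G.

Lemma SeqAxList_sentences q : In q SeqAxList -> sentence q.
Proof.
  unfold sentence, Seq1, Seq2, Seq3, Seq4, Seq5, fand, fneg, for_, fex, v.
  intros Hq; repeat destruct Hq as [<-|Hq]; try contradiction; simpl;
    repeat (split || apply tbounded_tcons || apply tbounded_tconc || apply tbounded_te);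
    simpl; lia.
Qed.

Lemma seq_ctx_cons G q : seq_ctx G -> seq_ctx (q :: G).
Proof. intros H x Hx; right; auto. Qed.

Lemma seq_ctx_map G s : seq_ctx G -> seq_ctx (map (fsubst s) G).
Proof.
  intros H q Hq. rewrite <- (fsubst_sentence q s) by now apply SeqAxList_sentences.
  apply in_map; auto.
Qed.

Lemma prv_cons_neq_e G a b : seq_ctx G -> pr G (feq (tcons a b) te) -> pr G fbot.
Proof.
  intros HG H. assert (X := P_ax _ G Seq1 ltac:(apply HG; simpl; tauto)).
  apply (P_allE _ _ _ a), (P_allE _ _ _ b) in X. unfold Seq1 in X. tsimp_in X.
  eapply P_impE; eauto.
Qed.

Lemma prv_cons_inj G a b c d : seq_ctx G ->
  pr G (feq (tcons a b) (tcons c d)) -> pr G (feq a c) /\ pr G (feq b d).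
Proof.
  intros HG H. assert (X := P_ax _ G Seq2 ltac:(apply HG; simpl; tauto)).
  rewrite <- fsubst_id in X. unfold Seq2 in X.
  apply (prv_allE_at _ _ _ a), (prv_allE_at _ _ _ b), (prv_allE_at _ _ _ c),
    (prv_allE_at _ _ _ d) in X.
  tsimp_in X. assert (Y := P_impE _ _ _ _ X H).
  split; [eapply prv_andE1 | eapply prv_andE2]; eauto.
Qed.

Lemma prv_conc_e G a : seq_ctx G -> pr G (feq (tconc a te) a).
Proof.
  intros HG. assert (X := P_ax _ G Seq3 ltac:(apply HG; simpl; tauto)).
  rewrite <- fsubst_id in X. unfold Seq3 in X. apply (prv_allE_at _ _ _ a) in X. now tsimp_in X.
Qed.

Lemma prv_conc_cons G a b c : seq_ctx G ->
  pr G (feq (tconc a (tcons b c)) (tcons (tconc a b) c)).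
Proof.
  intros HG. assert (X := P_ax _ G Seq4 ltac:(apply HG; simpl; tauto)).
  rewrite <- fsubst_id in X. unfold Seq4 in X.
  apply (prv_allE_at _ _ _ a), (prv_allE_at _ _ _ b), (prv_allE_at _ _ _ c) in X. now tsimp_in X.
Qed.

Definition lift2 (G : list fm) : list fm := map (fsubst sh) (map (fsubst sh) G).
Definition sh2 (t : tm) : tm := tsubst sh (tsubst sh t).

Lemma sh2_tcons a b : sh2 (tcons a b) = tcons (sh2 a) (sh2 b).
Proof. unfold sh2; now rewrite !tsubst_tcons. Qed.

Lemma seq_ctx_lift2 G : seq_ctx G -> seq_ctx (lift2 G).
Proof. intro H; apply seq_ctx_map, seq_ctx_map, H. Qed.

(* In the second case the two fresh variables 1 and 0 name the components of [w]. *)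
Lemma prv_seq_cases G w r : seq_ctx G -> pr (feq w te :: G) r ->
  pr (feq (sh2 w) (tcons (tvar 1) (tvar 0)) :: lift2 G) (fsubst sh (fsubst sh r)) ->
  pr G r.
Proof.
  intros HG H1 H2. assert (X := P_ax _ G Seq5 ltac:(apply HG; simpl; tauto)).
  rewrite <- fsubst_id in X. unfold Seq5 in X. apply (prv_allE_at _ _ _ w) in X.
  simpl in X. eapply prv_orE; [exact X| |].
  - now rewrite tsubst_te.
  - eapply prv_exE; [apply prv_hd|]. eapply prv_exE; [apply prv_hd|].
    eapply prv_weaken; [apply H2|]. unfold lift2, sh2. intros x [<-|Hx].
    + left. simpl. now rewrite tsubst_tcons.
    + right; right; right; exact Hx.
Qed.

Lemma prv_lift2 G p : pr G p -> pr (lift2 G) (fsubst sh (fsubst sh p)).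
Proof. intro H; apply prv_fsubst, prv_fsubst, H. Qed.

Lemma prv_conc_cons_neq_e G s1 s2 w : seq_ctx G ->
  pr G (feq (tconc (tcons s1 s2) w) te) -> pr G fbot.
Proof.
  intros HG H. apply (prv_seq_cases G w); auto.
  - apply (prv_cons_neq_e _ s1 s2); [now apply seq_ctx_cons|].
    eapply prv_eq_trans; [apply prv_eq_sym, prv_conc_e; now apply seq_ctx_cons|].
    eapply prv_eq_trans; [apply prv_tconc_congr; [apply P_refl | apply prv_eq_sym, prv_hd]|].
    now apply prv_cons.
  - assert (HG2 : seq_ctx (feq (sh2 w) (tcons (tvar 1) (tvar 0)) :: lift2 G))
      by now apply seq_ctx_cons, seq_ctx_lift2.
    apply prv_exfalso, (prv_cons_neq_e _ (tconc (tcons (sh2 s1) (sh2 s2)) (tvar 1)) (tvar 0)); auto.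
    eapply prv_eq_trans; [apply prv_eq_sym, prv_conc_cons; auto|].
    eapply prv_eq_trans; [apply prv_eq_sym, prv_tconc_congr; [apply P_refl | apply prv_hd]|].
    apply prv_cons. assert (H' := prv_lift2 _ _ H). now tsimp_in H'.
Qed.

(** * Finite binary trees as closed terms *)

Inductive tree := Lf | Nd (a b : tree).

Lemma tree_eq_dec (a b : tree) : {a = b} + {a <> b}.
Proof. decide equality. Defined.

Fixpoint tree_tm (c : tree) : tm :=
  match c with Lf => te | Nd a b => tcons (tree_tm a) (tree_tm b) end.

(* A list [c0; ...; cn] is stored as the sequence e |- cn |- ... |- c0 (with [glue z] in
   place of e), so its head is the last entry and can be fixed by a single cons. *)
Fixpoint glue (z : tm) (cs : list tree) : tm :=
  match cs with [] => z | c :: cs => tcons (glue z cs) (tree_tm c) end.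

Definition trace_tm (cs : list tree) : tm := glue te cs.

Lemma tsubst_tree_tm s c : tsubst s (tree_tm c) = tree_tm c.
Proof. induction c; tsimp; congruence. Qed.

Lemma tsubst_glue s z cs : tsubst s (glue z cs) = glue (tsubst s z) cs.
Proof. induction cs; simpl; auto. now rewrite tsubst_tcons, IHcs, tsubst_tree_tm. Qed.

Lemma tsubst_trace_tm s cs : tsubst s (trace_tm cs) = trace_tm cs.
Proof. unfold trace_tm; now rewrite tsubst_glue, tsubst_te. Qed.

Hint Rewrite tsubst_tree_tm tsubst_glue tsubst_trace_tm : tsimp.

Lemma glue_app z P c : glue z (P ++ [c]) = glue (tcons z (tree_tm c)) P.
Proof. induction P; simpl; congruence. Qed.

Lemma prv_glue_congr G z z' P : pr G (feq z z') -> pr G (feq (glue z P) (glue z' P)).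
Proof. intro H; induction P; simpl; auto using prv_tcons_congr, P_refl. Qed.

Lemma prv_conc_trace G s ws : seq_ctx G -> pr G (feq (tconc s (trace_tm ws)) (glue s ws)).
Proof.
  intro HG; induction ws; simpl; [now apply prv_conc_e|].
  eapply prv_eq_trans; [now apply prv_conc_cons|]. now apply prv_tcons_congr, P_refl.
Qed.

(* An end-extension of a non-empty sequence equal to a concrete list is an initial segment of
   it, i.e. a suffix [l'] of the list. *)
Lemma prv_conc_trace_inv l : forall G s1 s2 w r, seq_ctx G ->
  pr G (feq (tconc (tcons s1 s2) w) (trace_tm l)) ->
  (forall pre l', l = pre ++ l' -> l' <> [] -> pr (feq (tcons s1 s2) (trace_tm l') :: G) r) ->
  pr G r.
Proof.
  induction l as [|c cs IH]; intros G s1 s2 w r HG H Hr.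
  { apply prv_exfalso; eapply prv_conc_cons_neq_e; eauto. }
  apply (prv_seq_cases G w); auto.
  - apply (prv_cut _ (feq (tcons s1 s2) (trace_tm (c :: cs)))).
    2: eapply prv_weaken; [apply (Hr [] (c :: cs)); easy | solve_incl].
    eapply prv_eq_trans; [apply prv_eq_sym, prv_conc_e; now apply seq_ctx_cons|].
    eapply prv_eq_trans; [apply prv_tconc_congr; [apply P_refl | apply prv_eq_sym, prv_hd]|].
    now apply prv_cons.
  - set (G2 := feq (sh2 w) (tcons (tvar 1) (tvar 0)) :: lift2 G).
    assert (HG2 : seq_ctx G2) by now apply seq_ctx_cons, seq_ctx_lift2.
    assert (H' := prv_lift2 _ _ H). tsimp_in H'.
    assert (H3 : pr G2 (feq (tcons (tconc (tcons (sh2 s1) (sh2 s2)) (tvar 1)) (tvar 0))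
                            (trace_tm (c :: cs)))).
    { eapply prv_eq_trans; [apply prv_eq_sym, prv_conc_cons; auto|].
      eapply prv_eq_trans; [apply prv_tconc_congr; [apply P_refl | apply prv_eq_sym, prv_hd]|].
      apply prv_cons; exact H'. }
    apply prv_cons_inj in H3 as [H3 _]; auto.
    apply (IH G2 (sh2 s1) (sh2 s2) (tvar 1)); auto.
    intros pre l' E Hne.
    assert (X := prv_lift2 _ _ (Hr (c :: pre) l' ltac:(now rewrite E) Hne)). tsimp_in X.
    eapply prv_weaken; [exact X|]. unfold lift2, sh2.
    intros x [<-|Hx]; [left; now tsimp | right; right; exact Hx].
Qed.

(** * Tree rewriting systems *)

Inductive pat := PLf | PNd (p q : pat) | PVar (i : nat).

Fixpoint pmatch (p : pat) (c : tree) : option (list (nat * tree)) :=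
  match p, c with
  | PLf, Lf => Some []
  | PVar i, c => Some [(i, c)]
  | PNd p q, Nd a b =>
      match pmatch p a, pmatch q b with Some m1, Some m2 => Some (m1 ++ m2) | _, _ => None end
  | _, _ => None
  end.

Fixpoint lookup (i : nat) (m : list (nat * tree)) : tree :=
  match m with [] => Lf | (j, t) :: m' => if Nat.eqb i j then t else lookup i m' end.

Fixpoint pinst (m : list (nat * tree)) (p : pat) : tree :=
  match p with PLf => Lf | PNd p q => Nd (pinst m p) (pinst m q) | PVar i => lookup i m end.

Fixpoint pvars (p : pat) : list nat :=
  match p with PLf => [] | PNd p q => pvars p ++ pvars q | PVar i => [i] end.

Record rule := mkRule { arity : nat; lhs : pat; rhs : pat }.

Fixpoint step (rs : list rule) (c : tree) : option tree :=
  match rs with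
  | [] => None
  | r :: rs => match pmatch (lhs r) c with Some m => Some (pinst m (rhs r)) | None => step rs c end
  end.

Fixpoint pat_compat (p q : pat) : bool :=
  match p, q with
  | PVar _, _ | _, PVar _ | PLf, PLf => true
  | PNd p1 p2, PNd q1 q2 => pat_compat p1 q1 && pat_compat p2 q2
  | _, _ => false
  end.

Fixpoint no_overlap (rs : list rule) : bool :=
  match rs with
  | [] => true
  | r :: rs => forallb (fun r' => negb (pat_compat (lhs r) (lhs r'))) rs && no_overlap rs
  end.

Fixpoint nodupb (l : list nat) : bool :=
  match l with [] => true | i :: l => negb (existsb (Nat.eqb i) l) && nodupb l end.

Definition wf_rule (r : rule) : bool :=
  nodupb (pvars (lhs r)) && forallb (fun i => Nat.ltb i (arity r)) (pvars (lhs r)) &&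
  forallb (fun i => existsb (Nat.eqb i) (pvars (lhs r))) (pvars (rhs r)).

Definition good_rules (rs : list rule) : Prop := no_overlap rs = true /\ forallb wf_rule rs = true.

Lemma pmatch_compat p q c m1 m2 :
  pmatch p c = Some m1 -> pmatch q c = Some m2 -> pat_compat p q = true.
Proof.
  revert q c m1 m2; induction p; intros q c m1 m2 H1 H2; destruct q; simpl in *; auto;
    destruct c; try discriminate.
  destruct (pmatch p1 c1) eqn:E1, (pmatch p2 c2) eqn:E2; try discriminate.
  destruct (pmatch q1 c1) eqn:E3, (pmatch q2 c2) eqn:E4; try discriminate.
  erewrite IHp1, IHp2; eauto.
Qed.

Lemma step_pmatch rs r c m : no_overlap rs = true -> In r rs -> pmatch (lhs r) c = Some m ->
  step rs c = Some (pinst m (rhs r)).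
Proof.
  induction rs as [|r0 rs IH]; simpl; intros Hn Hi Hm; [destruct Hi|].
  apply andb_true_iff in Hn as [Hf Hn].
  destruct Hi as [<-|Hi]; [now rewrite Hm|].
  destruct (pmatch (lhs r0) c) eqn:E; auto.
  rewrite forallb_forall in Hf. specialize (Hf r Hi).
  now rewrite (pmatch_compat _ _ _ _ _ E Hm) in Hf.
Qed.

Lemma step_None rs r c : step rs c = None -> In r rs -> pmatch (lhs r) c = None.
Proof.
  induction rs as [|r0 rs IH]; simpl; intros H Hi; [destruct Hi|].
  destruct (pmatch (lhs r0) c) eqn:E; try discriminate.
  destruct Hi as [<-|Hi]; auto.
Qed.

Lemma step_Some rs c c' : step rs c = Some c' ->
  exists r m, In r rs /\ pmatch (lhs r) c = Some m /\ c' = pinst m (rhs r).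
Proof.
  induction rs as [|r rs IH]; simpl; intros H; try discriminate.
  destruct (pmatch (lhs r) c) eqn:E.
  - injection H as <-. exists r, l; auto.
  - destruct (IH H) as [r' [m [A B]]]. exists r', m; auto.
Qed.

Lemma wf_rule_spec r : wf_rule r = true -> nodupb (pvars (lhs r)) = true /\
  (forall i, In i (pvars (lhs r)) -> i < arity r) /\
  (forall i, In i (pvars (rhs r)) -> In i (pvars (lhs r))).
Proof.
  unfold wf_rule; intro H. apply andb_true_iff in H as [H H3]. apply andb_true_iff in H as [H1 H2].
  rewrite forallb_forall in H2, H3. repeat split; auto.
  - intros i Hi. apply Nat.ltb_lt; auto.
  - intros i Hi. destruct (proj1 (existsb_exists _ _) (H3 i Hi)) as [j [Hj E]].
    apply Nat.eqb_eq in E; now subst.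
Qed.

Lemma pmatch_dom p c m : pmatch p c = Some m -> map fst m = pvars p.
Proof.
  revert c m; induction p; intros [|a b] m H; simpl in *; try discriminate;
    try (injection H as <-; reflexivity).
  destruct (pmatch p1 a) eqn:E1, (pmatch p2 b) eqn:E2; try discriminate.
  injection H as <-. rewrite map_app. erewrite IHp1, IHp2; eauto.
Qed.

Lemma lookup_app_r i m1 m2 : ~ In i (map fst m1) -> lookup i (m1 ++ m2) = lookup i m2.
Proof.
  induction m1 as [|[j t] m1 IH]; simpl; intros H; auto.
  destruct (Nat.eqb i j) eqn:E; [apply Nat.eqb_eq in E; subst; tauto | apply IH; tauto].
Qed.

Lemma lookup_In i m : In i (map fst m) -> In (i, lookup i m) m.
Proof.
  induction m as [|[j t] m IH]; simpl; intros H; [destruct H|].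
  destruct (Nat.eqb i j) eqn:E; [apply Nat.eqb_eq in E; subst; auto|].
  right; apply IH. destruct H; auto. subst; now rewrite Nat.eqb_refl in E.
Qed.

Lemma nodupb_app a b : nodupb (a ++ b) = true ->
  nodupb a = true /\ nodupb b = true /\ (forall i, In i a -> ~ In i b).
Proof.
  induction a as [|x a IH]; simpl; intros H; auto.
  apply andb_true_iff in H as [H1 H2]. destruct (IH H2) as [A [B C]].
  rewrite existsb_app in H1. apply negb_true_iff, orb_false_iff in H1 as [H1a H1b].
  rewrite H1a, A; repeat split; auto.
  intros i [<-|Hi] Hb; [|now apply (C i)].
  assert (existsb (Nat.eqb x) b = true)
    by (apply existsb_exists; exists x; auto using Nat.eqb_refl).
  congruence.
Qed.

Lemma pinst_app_pmatch p c m : pmatch p c = Some m -> nodupb (pvars p) = true ->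
  forall m', pinst (m ++ m') p = c.
Proof.
  revert c m; induction p; intros [|a b] m H Hnd m'; simpl in *; try discriminate; auto.
  - destruct (pmatch p1 a) as [m1|] eqn:E1, (pmatch p2 b) as [m2|] eqn:E2; try discriminate.
    injection H as <-. apply nodupb_app in Hnd as [A [B C]].
    rewrite <- app_assoc. f_equal; auto.
    assert (Hfresh : forall q, (forall i, In i (pvars q) -> ~ In i (map fst m1)) ->
               pinst (m1 ++ m2 ++ m') q = pinst (m2 ++ m') q).
    { induction q; simpl; intros Hq; auto.
      - f_equal; [apply IHq1 | apply IHq2]; intros i Hi; apply Hq, in_or_app; auto.
      - apply lookup_app_r, Hq; now left. }
    rewrite Hfresh; auto. intros i Hi Hl. erewrite pmatch_dom in Hl; eauto. apply (C i); auto.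
  - injection H as <-; simpl; now rewrite Nat.eqb_refl.
  - injection H as <-; simpl; now rewrite Nat.eqb_refl.
Qed.

Lemma pinst_pmatch p c m : pmatch p c = Some m -> nodupb (pvars p) = true -> pinst m p = c.
Proof. intros; rewrite <- (app_nil_r m); eapply pinst_app_pmatch; eauto. Qed.

Definition steps (rs : list rule) : tree -> tree -> Prop :=
  clos_refl_trans_1n tree (fun c c' => step rs c = Some c').

Lemma steps_trans rs a b c : steps rs a b -> steps rs b c -> steps rs a c.
Proof.
  intros H1 H2. apply clos_rt_rt1n. apply clos_rt1n_rt in H1, H2. eapply rt_trans; eauto.
Qed.

Inductive run (rs : list rule) : list tree -> Prop :=
| run_one c : run rs [c]
| run_cons c c' l : step rs c = Some c' -> run rs (c' :: l) -> run rs (c :: c' :: l).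

Lemma run_step rs l : run rs l ->
  forall pre x y rest, l = pre ++ x :: y :: rest -> step rs x = Some y.
Proof.
  induction 1; intros [|z pre] x y rest E; simpl in E; try discriminate.
  - destruct pre as [|? []]; discriminate.
  - now injection E as -> -> ->.
  - injection E as -> E; eauto.
Qed.

Lemma steps_run rs c c' : steps rs c c' -> exists l, run rs (c :: l) /\ last (c :: l) Lf = c'.
Proof.
  induction 1 as [|c c1 c' Hs _ [l [Hr Hl]]]; [exists []; split; auto; constructor|].
  exists (c1 :: l); split; [now constructor|]. simpl in *; now destruct l.
Qed.

Lemma run_not_last_step rs l : run rs l -> forall d, In d l -> d <> last l Lf -> step rs d <> None.
Proof.
  induction 1; intros d Hd Hne; simpl in *.
  - destruct Hd as [<-|[]]; congruence.
  - destruct Hd as [<-|Hd]; [congruence | apply IHrun; auto].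
Qed.

Fixpoint pat_tm (p : pat) : tm :=
  match p with PLf => te | PNd p q => tcons (pat_tm p) (pat_tm q) | PVar i => tvar i end.

(* Note the order: [rule_fm r b a] says that [b] rewrites to [a]. *)
Definition rule_fm (r : rule) (b a : tm) : fm :=
  exn (arity r) (fand (feq (liftn (arity r) b) (pat_tm (lhs r)))
                      (feq (liftn (arity r) a) (pat_tm (rhs r)))).

Definition step_fm (rs : list rule) (b a : tm) : fm := Disj (map (fun r => rule_fm r b a) rs).

Lemma liftn_tree_tm k c : liftn k (tree_tm c) = tree_tm c.
Proof. apply tsubst_tree_tm. Qed.

Lemma tsubst_upn_pat_tm k s p : (forall i, In i (pvars p) -> i < k) ->
  tsubst (upn k s) (pat_tm p) = pat_tm p.
Proof.
  induction p; simpl; intros H; tsimp; auto using upn_lt.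
  rewrite IHp1, IHp2; auto; intros; apply H, in_or_app; auto.
Qed.

Lemma fsubst_rule_fm s r b a : wf_rule r = true ->
  fsubst s (rule_fm r b a) = rule_fm r (tsubst s b) (tsubst s a).
Proof.
  intro Hw. destruct (wf_rule_spec r Hw) as [_ [A B]]. unfold rule_fm.
  rewrite fsubst_exn; simpl. rewrite !upn_liftn, !tsubst_upn_pat_tm; auto.
Qed.

Lemma fsubst_step_fm s rs b a : forallb wf_rule rs = true ->
  fsubst s (step_fm rs b a) = step_fm rs (tsubst s b) (tsubst s a).
Proof.
  intro H. unfold step_fm. rewrite fsubst_Disj, map_map. f_equal.
  apply map_ext_in; intros r Hr. apply fsubst_rule_fm. rewrite forallb_forall in H; auto.
Qed.

Lemma prv_pmatch G p : seq_ctx G -> forall c, pr G (feq (tree_tm c) (pat_tm p)) ->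
  (pmatch p c = None -> pr G fbot) /\
  (forall m, pmatch p c = Some m -> forall i t, In (i, t) m -> pr G (feq (tvar i) (tree_tm t))).
Proof.
  intro HG. induction p; intros [|a b] H; simpl in *;
    split; intros; try discriminate; try (injection H0 as <-).
  - destruct H1.
  - eapply prv_cons_neq_e; eauto.
  - eapply prv_cons_neq_e; eauto using prv_eq_sym.
  - apply prv_cons_inj in H as [Ha Hb]; auto.
    destruct (IHp1 _ Ha) as [A1 _], (IHp2 _ Hb) as [A2 _].
    destruct (pmatch p1 a), (pmatch p2 b); auto. discriminate.
  - apply prv_cons_inj in H as [Ha Hb]; auto.
    destruct (IHp1 _ Ha) as [_ B1], (IHp2 _ Hb) as [_ B2].
    destruct (pmatch p1 a) eqn:E1, (pmatch p2 b) eqn:E2; try discriminate.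
    injection H0 as <-. apply in_app_or in H1 as []; eauto.
  - destruct H1 as [E|[]]. injection E as <- <-. now apply prv_eq_sym.
  - destruct H1 as [E|[]]. injection E as <- <-. now apply prv_eq_sym.
Qed.

Lemma prv_pat_tm_pinst G q m :
  (forall i, In i (pvars q) -> pr G (feq (tvar i) (tree_tm (lookup i m)))) ->
  pr G (feq (pat_tm q) (tree_tm (pinst m q))).
Proof.
  induction q; simpl; intros H; [apply P_refl | | apply H; now left].
  apply prv_tcons_congr; [apply IHq1 | apply IHq2]; intros; apply H, in_or_app; auto.
Qed.

Section StepFormula.
Variables (G : list fm) (rs : list rule).
Hypotheses (HG : seq_ctx G) (Hrs : good_rules rs).

Lemma prv_rule_fm_lhs r c a q : In r rs ->
  (forall G', seq_ctx G' -> pr G' (feq (liftn (arity r) (tree_tm c)) (pat_tm (lhs r))) ->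
     pr G' (feq (liftn (arity r) a) (pat_tm (rhs r))) ->
     pr G' (fsubst (fun i => tvar (i + arity r)) q)) ->
  pr (rule_fm r (tree_tm c) a :: G) q.
Proof.
  intros Hr Hq. eapply prv_exnE; [apply prv_hd|]. apply Hq.
  - apply seq_ctx_cons, seq_ctx_map, seq_ctx_cons, HG.
  - eapply prv_andE1, prv_hd.
  - eapply prv_andE2, prv_hd.
Qed.

Lemma prv_step_fm_det c c' a : step rs c = Some c' ->
  pr G (step_fm rs (tree_tm c) a) -> pr G (feq a (tree_tm c')).
Proof.
  destruct Hrs as [Hno Hwf]. intros Hs H. eapply prv_DisjE; [exact H|].
  intros p Hp. apply in_map_iff in Hp as [r [<- Hr]].
  rewrite forallb_forall in Hwf. destruct (wf_rule_spec r (Hwf r Hr)) as [_ [_ Hsub]].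
  apply prv_rule_fm_lhs; auto. intros G' HG' H1 H2. rewrite liftn_tree_tm in H1.
  simpl; rewrite tsubst_tree_tm.
  destruct (prv_pmatch G' (lhs r) HG' c H1) as [A B].
  destruct (pmatch (lhs r) c) as [m|] eqn:E; [|apply prv_exfalso; auto].
  rewrite (step_pmatch rs r c m Hno Hr E) in Hs. injection Hs as <-.
  eapply prv_eq_trans; [exact H2|]. apply prv_pat_tm_pinst. intros i Hi.
  apply (B m eq_refl), lookup_In. rewrite (pmatch_dom _ _ _ E); auto.
Qed.

Lemma prv_step_fm_halt c a : step rs c = None -> pr G (step_fm rs (tree_tm c) a) -> pr G fbot.
Proof.
  intros Hs H. eapply prv_DisjE; [exact H|].
  intros p Hp. apply in_map_iff in Hp as [r [<- Hr]].
  apply prv_rule_fm_lhs; auto. intros G' HG' H1 _. rewrite liftn_tree_tm in H1.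
  apply (prv_pmatch G' (lhs r) HG' c H1). eapply step_None; eauto.
Qed.
End StepFormula.

Lemma tsubst_pat_tm_lookup k m p s : (forall i, In i (pvars p) -> i < k) ->
  tsubst (sconsl (map (fun i => tree_tm (lookup i m)) (seq 0 k)) s) (pat_tm p) =
  tree_tm (pinst m p).
Proof.
  induction p; simpl; intros H; tsimp; auto.
  - rewrite IHp1, IHp2; auto; intros; apply H, in_or_app; auto.
  - assert (Hi : i < k) by (apply H; auto).
    rewrite sconsl_nth by now rewrite length_map, length_seq.
    rewrite nth_indep with (d' := tree_tm (lookup 0 m)) by now rewrite length_map, length_seq.
    rewrite map_nth with (d := 0). now rewrite seq_nth.
Qed.

Lemma prv_step_fm_intro G rs c c' : good_rules rs -> step rs c = Some c' ->
  pr G (step_fm rs (tree_tm c) (tree_tm c')).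
Proof.
  intros [Hno Hwf] Hs. destruct (step_Some _ _ _ Hs) as [r [m [Hr [E ->]]]].
  rewrite forallb_forall in Hwf. destruct (wf_rule_spec r (Hwf r Hr)) as [Hnd [Hv Hsub]].
  eapply prv_DisjI; [apply in_map_iff; exists r; split; eauto|].
  unfold rule_fm. rewrite <- fsubst_id.
  apply prv_exnI with (ws := map (fun i => tree_tm (lookup i m)) (seq 0 (arity r))).
  { now rewrite length_map, length_seq. }
  simpl. rewrite !tsubst_pat_tm_lookup; auto. unfold liftn; rewrite !tsubst_comp, !tsubst_tree_tm.
  rewrite (pinst_pmatch _ _ _ E Hnd). apply prv_andI; apply P_refl.
Qed.

Lemma prv_step_fm_congr G rs b b' a a' : forallb wf_rule rs = true ->
  pr G (feq b' b) -> pr G (feq a' a) -> pr G (step_fm rs b' a') -> pr G (step_fm rs b a).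
Proof.
  intros Hw Hb Ha H.
  assert (X1 := P_leib _ G (step_fm rs (tvar 0) (tsubst sh a')) _ _ Hb).
  rewrite !fsubst_step_fm in X1 by auto. tsimp_in X1.
  assert (X2 := P_leib _ G (step_fm rs (tsubst sh b) (tvar 0)) _ _ Ha).
  rewrite !fsubst_step_fm in X2 by auto. tsimp_in X2. auto.
Qed.

(* In [X = ((u |- a) |- b) o w] the entry [b] is stored after [a], so it is the earlier
   configuration of the run. *)
Definition valid_fm (rs : list rule) (X : tm) : fm :=
  fall (fall (fall (fall
    (fimp (feq (liftn 4 X) (tconc (tcons (tcons (tvar 3) (tvar 2)) (tvar 1)) (tvar 0)))
          (step_fm rs (tvar 1) (tvar 2)))))).

Definition first_fm (H : tree) (X : tm) : fm :=
  fall (fall (fimp (feq (liftn 2 X) (tconc (tcons te (tvar 1)) (tvar 0)))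
                   (feq (tvar 1) (tree_tm H)))).

Definition reaches_fm (rs : list rule) (H : tree) (I : tm) : fm :=
  fex (fand (valid_fm rs (tcons (tvar 0) (liftn 1 I))) (first_fm H (tcons (tvar 0) (liftn 1 I)))).

Lemma fsubst_valid_fm s rs X : forallb wf_rule rs = true ->
  fsubst s (valid_fm rs X) = valid_fm rs (tsubst s X).
Proof.
  intro Hw. unfold valid_fm. change (fsubst s (fall (fall (fall (fall ?p)))))
    with (fall (fall (fall (fall (fsubst (upn 4 s) p))))).
  cbn [fsubst]. rewrite fsubst_step_fm by auto.
  rewrite !tsubst_tconc, !tsubst_tcons, upn_liftn; cbn [tsubst]; now rewrite !upn_lt by lia.
Qed.

Lemma fsubst_first_fm s H X : fsubst s (first_fm H X) = first_fm H (tsubst s X).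
Proof.
  unfold first_fm. change (fsubst s (fall (fall ?p))) with (fall (fall (fsubst (upn 2 s) p))).
  cbn [fsubst]. rewrite !tsubst_tconc, !tsubst_tcons, tsubst_te, upn_liftn, tsubst_tree_tm.
  cbn [tsubst]; now rewrite !upn_lt by lia.
Qed.

Lemma fsubst_reaches_fm s rs H I : forallb wf_rule rs = true ->
  fsubst s (reaches_fm rs H I) = reaches_fm rs H (tsubst s I).
Proof.
  intro Hw. unfold reaches_fm.
  change (fsubst s (fex (fand ?p ?q))) with (fex (fand (fsubst (upn 1 s) p) (fsubst (upn 1 s) q))).
  rewrite fsubst_valid_fm, fsubst_first_fm, tsubst_tcons, upn_liftn by auto.
  cbn [tsubst]; now rewrite upn_lt by lia.
Qed.

Lemma prv_valid_fm_at G rs X u a b w : forallb wf_rule rs = true -> pr G (valid_fm rs X) ->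
  pr G (fimp (feq X (tconc (tcons (tcons u a) b) w)) (step_fm rs b a)).
Proof.
  intros Hw H. rewrite <- fsubst_id in H. unfold valid_fm in H.
  apply (prv_allE_at _ _ _ u), (prv_allE_at _ _ _ a), (prv_allE_at _ _ _ b),
    (prv_allE_at _ _ _ w) in H.
  simpl in H. rewrite !tsubst_scons_liftn, liftn_0, tsubst_id, fsubst_step_fm in H by auto.
  now tsimp_in H.
Qed.

Lemma prv_first_fm_at G H X h w : pr G (first_fm H X) ->
  pr G (fimp (feq X (tconc (tcons te h) w)) (feq h (tree_tm H))).
Proof.
  intros Hb. rewrite <- fsubst_id in Hb. unfold first_fm in Hb.
  apply (prv_allE_at _ _ _ h), (prv_allE_at _ _ _ w) in Hb.
  simpl in Hb. rewrite !tsubst_scons_liftn, liftn_0, tsubst_id in Hb. now tsimp_in Hb.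
Qed.

Lemma prv_tree_tm_neq G c c' : seq_ctx G -> c <> c' ->
  pr G (feq (tree_tm c) (tree_tm c')) -> pr G fbot.
Proof.
  intro HG; revert c'; induction c as [|a IHa b IHb]; intros [|a' b'] Hne H; simpl in *.
  - congruence.
  - eapply prv_cons_neq_e; eauto using prv_eq_sym.
  - eapply prv_cons_neq_e; eauto.
  - apply prv_cons_inj in H as [H1 H2]; auto.
    destruct (tree_eq_dec a a'); [subst; apply (IHb b'); congruence | eauto].
Qed.

Lemma prv_valid_fm_run G rs l : seq_ctx G -> good_rules rs -> run rs l ->
  pr G (valid_fm rs (trace_tm l)).
Proof.
  intros HG [Hno Hwf] Hrun. unfold valid_fm. apply P_allI, P_allI, P_allI, P_allI, P_impI.
  unfold liftn; rewrite tsubst_trace_tm.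
  eapply prv_conc_trace_inv with (l := l) (w := tvar 0); [| apply prv_eq_sym, prv_hd |].
  { apply seq_ctx_cons; repeat apply seq_ctx_map; auto. }
  intros pre l' E Hne. set (G' := _ :: _ :: _).
  assert (HG' : seq_ctx G') by (apply seq_ctx_cons, seq_ctx_cons; repeat apply seq_ctx_map; auto).
  assert (X : pr G' (feq (tcons (tcons (tvar 3) (tvar 2)) (tvar 1)) (trace_tm l'))) by apply prv_hd.
  destruct l' as [|c [|c' rest]]; [congruence| |]; unfold trace_tm in X; simpl in X.
  - apply prv_cons_inj in X as [X _]; auto. apply prv_exfalso; eapply prv_cons_neq_e; eauto.
  - apply prv_cons_inj in X as [X Hb]; auto. apply prv_cons_inj in X as [_ Ha]; auto.
    eapply prv_step_fm_congr; eauto using prv_eq_sym.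
    apply prv_step_fm_intro; [now split|]. eapply run_step; eauto.
Qed.

Lemma prv_first_fm_trace G H l : seq_ctx G -> l <> [] -> last l Lf = H ->
  pr G (first_fm H (trace_tm l)).
Proof.
  intros HG Hne Hl. unfold first_fm. apply P_allI, P_allI, P_impI.
  unfold liftn; rewrite tsubst_trace_tm.
  eapply prv_conc_trace_inv with (l := l) (w := tvar 0); [| apply prv_eq_sym, prv_hd |].
  { apply seq_ctx_cons; repeat apply seq_ctx_map; auto. }
  intros pre l' E Hne'. set (G' := _ :: _ :: _).
  assert (HG' : seq_ctx G') by (apply seq_ctx_cons, seq_ctx_cons; repeat apply seq_ctx_map; auto).
  assert (X : pr G' (feq (tcons te (tvar 1)) (trace_tm l'))) by apply prv_hd.
  destruct l' as [|c [|c' rest]]; [congruence| |]; unfold trace_tm in X; simpl in X.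
  - apply prv_cons_inj in X as [_ X]; auto.
    subst l; rewrite last_last in Hl; now subst.
  - apply prv_cons_inj in X as [X _]; auto.
    apply prv_exfalso; eapply prv_cons_neq_e; eauto using prv_eq_sym.
Qed.

Lemma prv_reaches_fm G rs H c0 l : seq_ctx G -> good_rules rs -> run rs (c0 :: l) ->
  last (c0 :: l) Lf = H -> pr G (reaches_fm rs H (tree_tm c0)).
Proof.
  intros HG Hg Hrun Hl. unfold reaches_fm. apply (prv_exI _ _ (trace_tm l)).
  change (fsubst ?s (fand ?p ?q)) with (fand (fsubst s p) (fsubst s q)).
  rewrite fsubst_valid_fm, fsubst_first_fm by apply Hg.
  tsimp; rewrite liftn_tree_tm, tsubst_tree_tm.
  change (tcons (trace_tm l) (tree_tm c0)) with (trace_tm (c0 :: l)).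
  apply prv_andI; [now apply prv_valid_fm_run | now apply prv_first_fm_trace].
Qed.

Section Refutation.
Variables (rs : list rule) (H0 : tree).
Hypothesis Hrs : good_rules rs.

Lemma prv_first_fm_glue G X z P c : seq_ctx G -> pr G (first_fm H0 X) ->
  pr G (feq X (glue z (P ++ [c]))) -> pr G (feq z te) -> pr G (feq (tree_tm c) (tree_tm H0)).
Proof.
  intros HG HF HX Hz. eapply P_impE; [apply prv_first_fm_at with (w := trace_tm P), HF|].
  eapply prv_eq_trans; [exact HX|]. eapply prv_eq_trans; [|apply prv_eq_sym, prv_conc_trace, HG].
  rewrite glue_app. now apply prv_glue_congr, prv_tcons_congr, P_refl.
Qed.

Lemma prv_valid_fm_glue G X z y x P c : seq_ctx G -> pr G (valid_fm rs X) ->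
  pr G (feq X (glue z (P ++ [c]))) -> pr G (feq z (tcons y x)) -> pr G (step_fm rs (tree_tm c) x).
Proof.
  intros HG HV HX Hz. eapply P_impE.
  { apply prv_valid_fm_at with (u := y) (w := trace_tm P); [apply Hrs | exact HV]. }
  eapply prv_eq_trans; [exact HX|]. eapply prv_eq_trans; [|apply prv_eq_sym, prv_conc_trace, HG].
  rewrite glue_app. now apply prv_glue_congr, prv_tcons_congr, P_refl.
Qed.

(* A stored run that has reached the entry [c] and not yet [H0] either stops here, which
   contradicts [first_fm], or continues with an entry [tvar 0] that [c] steps to. *)
Lemma prv_trace_continues G X z P c : seq_ctx G -> c <> H0 ->
  pr G (valid_fm rs X) -> pr G (first_fm H0 X) -> pr G (feq X (glue z (P ++ [c]))) ->
  (forall G2, seq_ctx G2 -> pr G2 (step_fm rs (tree_tm c) (tvar 0)) ->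
     pr G2 (valid_fm rs (sh2 X)) -> pr G2 (first_fm H0 (sh2 X)) ->
     pr G2 (feq (sh2 X) (glue (tcons (tvar 1) (tvar 0)) (P ++ [c]))) -> pr G2 fbot) ->
  pr G fbot.
Proof.
  intros HG Hc HV HF HX Hnext. apply (prv_seq_cases G z); auto.
  { apply (prv_tree_tm_neq _ c H0); [now apply seq_ctx_cons | exact Hc|].
    apply prv_first_fm_glue with X z P; auto using prv_cons, prv_hd, seq_ctx_cons. }
  set (G2 := feq (sh2 z) (tcons (tvar 1) (tvar 0)) :: lift2 G).
  assert (HG2 : seq_ctx G2) by now apply seq_ctx_cons, seq_ctx_lift2.
  assert (HV2 : pr G2 (valid_fm rs (sh2 X))).
  { apply prv_cons. unfold sh2; rewrite <- !fsubst_valid_fm by apply Hrs. now apply prv_lift2. }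
  assert (HX2 : pr G2 (feq (sh2 X) (glue (sh2 z) (P ++ [c])))).
  { apply prv_cons. assert (H := prv_lift2 _ _ HX). now tsimp_in H. }
  apply Hnext; auto.
  - eapply prv_valid_fm_glue; eauto using prv_hd.
  - apply prv_cons. unfold sh2; rewrite <- !fsubst_first_fm. now apply prv_lift2.
  - eapply prv_eq_trans; [exact HX2|]. now apply prv_glue_congr, prv_hd.
Qed.

Lemma prv_trace_refute R : forall P c G X z, run rs (c :: R) -> step rs (last (c :: R) Lf) = None ->
  (forall d, In d (P ++ c :: R) -> d <> H0) -> seq_ctx G ->
  pr G (valid_fm rs X) -> pr G (first_fm H0 X) -> pr G (feq X (glue z (P ++ [c]))) -> pr G fbot.
Proof.
  induction R as [|c1 R IH]; intros P c G X z Hrun Hend Hd HG HV HF HX;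
    (apply (prv_trace_continues G X z P c); [auto | apply Hd, in_or_app; simpl; auto | auto..]);
    intros G2 HG2 HS HV2 HF2 HX2.
  - eapply prv_step_fm_halt; eauto.
  - inversion Hrun as [|? ? ? Hst Hrun1]; subst.
    assert (Ha : pr G2 (feq (tvar 0) (tree_tm c1))) by (eapply prv_step_fm_det; eauto).
    apply (IH (P ++ [c]) c1 G2 (sh2 X) (tvar 1)); auto.
    + intros d Hdd. apply Hd. now rewrite <- app_assoc in Hdd.
    + eapply prv_eq_trans; [exact HX2|]. rewrite !glue_app. apply prv_glue_congr.
      apply prv_tcons_congr; [apply prv_tcons_congr; [apply P_refl | exact Ha] | apply P_refl].
Qed.

Lemma prv_not_reaches_fm G c0 l : seq_ctx G -> run rs (c0 :: l) ->
  step rs (last (c0 :: l) Lf) = None -> (forall d, In d (c0 :: l) -> d <> H0) ->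
  pr G (fneg (reaches_fm rs H0 (tree_tm c0))).
Proof.
  intros HG Hrun Hl Hd. apply P_impI. eapply prv_exE; [apply prv_hd|]. simpl fsubst.
  rewrite liftn_tree_tm.
  apply (prv_trace_refute l [] c0 _ (tcons (tvar 0) (tree_tm c0)) (tvar 0)); auto.
  - apply seq_ctx_cons, seq_ctx_map, seq_ctx_cons, HG.
  - eapply prv_andE1, prv_hd.
  - eapply prv_andE2, prv_hd.
  - apply P_refl.
Qed.
End Refutation.

(** * A rewriting machine for partial recursive functions *)

Fixpoint num (n : nat) : tree := match n with 0 => Lf | S n => Nd (num n) Lf end.

Fixpoint ptree (t : tree) : pat := match t with Lf => PLf | Nd a b => PNd (ptree a) (ptree b) end.

Definition tagged (k : nat) (x : tree) : tree := Nd (num k) x.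
Definition ptagged (k : nat) (x : pat) : pat := PNd (ptree (num k)) x.

(* Machine states: evaluate a program on an argument list, evaluate a list of programs,
   return a value, project, decode a number into a tree, and the unpairing loop of decoding.
   Each carries a continuation: a stack of frames (the [pK...] patterns) recording what to do
   with the value returned. *)
Definition Eval f xs K := tagged 0 (Nd f (Nd xs K)).
Definition Evals hs xs K := tagged 1 (Nd hs (Nd xs K)).
Definition Ret y K := tagged 2 (Nd y K).
Definition Proj i xs K := tagged 3 (Nd i (Nd xs K)).
Definition Decode m K := tagged 4 (Nd m K).
Definition Unpair k a b K := tagged 5 (Nd k (Nd a (Nd b K))).
Definition KMu g n xs K := tagged 4 (Nd g (Nd n (Nd xs K))).
Definition KStart m := tagged 7 m.

Definition pEval f xs K := ptagged 0 (PNd f (PNd xs K)).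
Definition pEvals hs xs K := ptagged 1 (PNd hs (PNd xs K)).
Definition pRet y K := ptagged 2 (PNd y K).
Definition pProj i xs K := ptagged 3 (PNd i (PNd xs K)).
Definition pDecode m K := ptagged 4 (PNd m K).
Definition pUnpair k a b K := ptagged 5 (PNd k (PNd a (PNd b K))).
Definition pKArgs hs xs K := ptagged 0 (PNd hs (PNd xs K)).
Definition pKCons y K := ptagged 1 (PNd y K).
Definition pKComp g K := ptagged 2 (PNd g K).
Definition pKPrec h n xs K := ptagged 3 (PNd h (PNd n (PNd xs K))).
Definition pKMu g n xs K := ptagged 4 (PNd g (PNd n (PNd xs K))).
Definition pKDecL b K := ptagged 5 (PNd b K).
Definition pKDecR a K := ptagged 6 (PNd a K).
Definition pKStart m := ptagged 7 m.

Fixpoint rf_tree (f : rf) : tree :=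
  match f with
  | rZero => tagged 0 Lf
  | rSucc => tagged 1 Lf
  | rProj i => tagged 2 (num i)
  | rComp g hs => tagged 3 (Nd (rf_tree g)
      ((fix rfs_tree (l : list rf) : tree :=
          match l with [] => Lf | h :: l => Nd (rf_tree h) (rfs_tree l) end) hs))
  | rPrec g h => tagged 4 (Nd (rf_tree g) (rf_tree h))
  | rMu g => tagged 5 (rf_tree g)
  end.

Fixpoint rfs_tree (l : list rf) : tree :=
  match l with [] => Lf | h :: l => Nd (rf_tree h) (rfs_tree l) end.

Fixpoint nats_tree (xs : list nat) : tree :=
  match xs with [] => Lf | x :: xs => Nd (num x) (nats_tree xs) end.

Local Notation V := PVar.

Definition eval_zero := mkRule 2 (pEval (ptagged 0 PLf) (V 0) (V 1)) (pRet PLf (V 1)).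
Definition eval_succ :=
  mkRule 3 (pEval (ptagged 1 PLf) (PNd (V 0) (V 1)) (V 2)) (pRet (PNd (V 0) PLf) (V 2)).
Definition eval_proj := mkRule 3 (pEval (ptagged 2 (V 0)) (V 1) (V 2)) (pProj (V 0) (V 1) (V 2)).
Definition proj_0 := mkRule 3 (pProj PLf (PNd (V 0) (V 1)) (V 2)) (pRet (V 0) (V 2)).
Definition proj_0_nil := mkRule 1 (pProj PLf PLf (V 0)) (pRet PLf (V 0)).
Definition proj_S :=
  mkRule 4 (pProj (PNd (V 0) PLf) (PNd (V 1) (V 2)) (V 3)) (pProj (V 0) (V 2) (V 3)).
Definition proj_S_nil := mkRule 2 (pProj (PNd (V 0) PLf) PLf (V 1)) (pRet PLf (V 1)).
Definition eval_comp := mkRule 4 (pEval (ptagged 3 (PNd (V 0) (V 1))) (V 2) (V 3))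
                                 (pEvals (V 1) (V 2) (pKComp (V 0) (V 3))).
Definition evals_nil := mkRule 2 (pEvals PLf (V 0) (V 1)) (pRet PLf (V 1)).
Definition evals_cons := mkRule 4 (pEvals (PNd (V 0) (V 1)) (V 2) (V 3))
                                  (pEval (V 0) (V 2) (pKArgs (V 1) (V 2) (V 3))).
Definition ret_args := mkRule 4 (pRet (V 0) (pKArgs (V 1) (V 2) (V 3)))
                                (pEvals (V 1) (V 2) (pKCons (V 0) (V 3))).
Definition ret_cons := mkRule 3 (pRet (V 0) (pKCons (V 1) (V 2))) (pRet (PNd (V 1) (V 0)) (V 2)).
Definition ret_comp := mkRule 3 (pRet (V 0) (pKComp (V 1) (V 2))) (pEval (V 1) (V 0) (V 2)).
Definition eval_prec_0 :=
  mkRule 4 (pEval (ptagged 4 (PNd (V 0) (V 1))) (PNd PLf (V 2)) (V 3)) (pEval (V 0) (V 2) (V 3)).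
Definition eval_prec_S :=
  mkRule 5 (pEval (ptagged 4 (PNd (V 0) (V 1))) (PNd (PNd (V 2) PLf) (V 3)) (V 4))
           (pEval (ptagged 4 (PNd (V 0) (V 1))) (PNd (V 2) (V 3)) (pKPrec (V 1) (V 2) (V 3) (V 4))).
Definition ret_prec := mkRule 5 (pRet (V 0) (pKPrec (V 1) (V 2) (V 3) (V 4)))
                                (pEval (V 1) (PNd (V 2) (PNd (V 0) (V 3))) (V 4)).
Definition eval_mu := mkRule 3 (pEval (ptagged 5 (V 0)) (V 1) (V 2))
                               (pEval (V 0) (PNd PLf (V 1)) (pKMu (V 0) PLf (V 1) (V 2))).
Definition ret_mu_found := mkRule 4 (pRet PLf (pKMu (V 0) (V 1) (V 2) (V 3))) (pRet (V 1) (V 3)).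
Definition ret_mu_next := mkRule 5 (pRet (PNd (V 0) PLf) (pKMu (V 1) (V 2) (V 3) (V 4)))
  (pEval (V 1) (PNd (PNd (V 2) PLf) (V 3)) (pKMu (V 1) (PNd (V 2) PLf) (V 3) (V 4))).
Definition decode_0 := mkRule 1 (pDecode PLf (V 0)) (pRet PLf (V 0)).
Definition decode_S := mkRule 2 (pDecode (PNd (V 0) PLf) (V 1)) (pUnpair (V 0) PLf PLf (V 1)).
Definition unpair_done :=
  mkRule 3 (pUnpair PLf (V 0) (V 1) (V 2)) (pDecode (V 0) (pKDecL (V 1) (V 2))).
Definition unpair_next := mkRule 4 (pUnpair (PNd (V 0) PLf) (PNd (V 1) PLf) (V 2) (V 3))
                                   (pUnpair (V 0) (V 1) (PNd (V 2) PLf) (V 3)).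
Definition unpair_diag := mkRule 3 (pUnpair (PNd (V 0) PLf) PLf (V 1) (V 2))
                                   (pUnpair (V 0) (PNd (V 1) PLf) PLf (V 2)).
Definition ret_decL :=
  mkRule 3 (pRet (V 0) (pKDecL (V 1) (V 2))) (pDecode (V 1) (pKDecR (V 0) (V 2))).
Definition ret_decR := mkRule 3 (pRet (V 0) (pKDecR (V 1) (V 2))) (pRet (PNd (V 1) (V 0)) (V 2)).
Definition ret_start := mkRule 2 (pRet (V 0) (pKStart (V 1))) (pEval (V 0) (PNd (V 1) PLf) PLf).

Definition machine : list rule :=
  [eval_zero; eval_succ; eval_proj; proj_0; proj_0_nil; proj_S; proj_S_nil; eval_comp; evals_nil;
   evals_cons; ret_args; ret_cons; ret_comp; eval_prec_0; eval_prec_S; ret_prec; eval_mu;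
   ret_mu_found; ret_mu_next; decode_0; decode_S; unpair_done; unpair_next; unpair_diag;
   ret_decL; ret_decR; ret_start].

Lemma machine_good : good_rules machine.
Proof. split; vm_compute; reflexivity. Qed.

Lemma steps_by_rule r c m c' : In r machine -> pmatch (lhs r) c = Some m ->
  steps machine (pinst m (rhs r)) c' -> steps machine c c'.
Proof.
  intros Hi Hm H. eapply Relation_Operators.rt1n_trans; [|exact H].
  apply step_pmatch; [apply machine_good | exact Hi | exact Hm].
Qed.

Ltac by_rule r := eapply (steps_by_rule r); [simpl; tauto | reflexivity | simpl].

Lemma steps_proj i : forall xs K,
  steps machine (Proj (num i) (nats_tree xs) K) (Ret (num (nth i xs 0)) K).
Proof.
  induction i; intros [|x xs] K; simpl.
  - by_rule proj_0_nil; constructor.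
  - by_rule proj_0; constructor.
  - by_rule proj_S_nil; constructor.
  - by_rule proj_S; apply IHi.
Qed.

Lemma steps_mu_search g xs K n :
  (forall K', steps machine (Eval (rf_tree g) (nats_tree (n :: xs)) K') (Ret (num 0) K')) ->
  (forall j, j < n -> exists k, forall K',
     steps machine (Eval (rf_tree g) (nats_tree (j :: xs)) K') (Ret (num (S k)) K')) ->
  forall d j, j + d = n ->
  steps machine (Eval (rf_tree g) (nats_tree (j :: xs)) (KMu (rf_tree g) (num j) (nats_tree xs) K))
                (Ret (num n) K).
Proof.
  intros H0 Hlt d. induction d; intros j Hj.
  - rewrite Nat.add_0_r in Hj; subst j. eapply steps_trans; [apply H0|].
    by_rule ret_mu_found; constructor.
  - destruct (Hlt j ltac:(lia)) as [k Hk]. eapply steps_trans; [apply Hk|].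
    by_rule ret_mu_next. apply (IHd (S j)); lia.
Qed.

Fixpoint steps_eval f xs y (H : reval f xs y) {struct H} :
  forall K, steps machine (Eval (rf_tree f) (nats_tree xs) K) (Ret (num y) K)
with steps_evals hs xs ys (H : revals hs xs ys) {struct H} :
  forall K, steps machine (Evals (rfs_tree hs) (nats_tree xs) K) (Ret (nats_tree ys) K).
Proof.
  - destruct H; intro K.
    + by_rule eval_zero; constructor.
    + by_rule eval_succ; constructor.
    + by_rule eval_proj; apply steps_proj.
    + by_rule eval_comp. eapply steps_trans; [apply (steps_evals _ _ _ H)|].
      by_rule ret_comp; apply (steps_eval _ _ _ H0).
    + by_rule eval_prec_0; apply (steps_eval _ _ _ H).
    + by_rule eval_prec_S. eapply steps_trans; [apply (steps_eval _ _ _ H)|].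
      by_rule ret_prec; apply (steps_eval _ _ _ H0).
    + by_rule eval_mu. apply (steps_mu_search g xs K n (steps_eval _ _ _ H)) with (d := n) (j := 0).
      * intros j Hj. destruct (H0 j Hj) as [k Hk]. exists k; exact (steps_eval _ _ _ Hk).
      * reflexivity.
  - destruct H; intro K.
    + by_rule evals_nil; constructor.
    + by_rule evals_cons. eapply steps_trans; [apply (steps_eval _ _ _ H)|].
      by_rule ret_args. eapply steps_trans; [apply (steps_evals _ _ _ H0)|].
      by_rule ret_cons; constructor.
Qed.

Definition tri (s : nat) : nat := s * (s + 1) / 2.

Lemma tri_S s : tri (S s) = tri s + S s.
Proof.
  unfold tri. replace (S s * (S s + 1)) with (s * (s + 1) + S s * 2) by lia.
  now rewrite Nat.div_add by lia.
Qed.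

Lemma npair_tri a b : npair a b = tri (a + b) + b.
Proof. reflexivity. Qed.

Lemma tri_mono s s' : s <= s' -> tri s <= tri s'.
Proof. induction 1; auto. rewrite tri_S; lia. Qed.

Lemma npair_inj a b a' b' : npair a b = npair a' b' -> a = a' /\ b = b'.
Proof.
  rewrite !npair_tri; intro E.
  assert (a + b = a' + b').
  { destruct (Nat.lt_trichotomy (a + b) (a' + b')) as [H|[H|H]]; auto; exfalso.
    - assert (tri (S (a + b)) <= tri (a' + b')) by (apply tri_mono; lia). rewrite tri_S in *; lia.
    - assert (tri (S (a' + b')) <= tri (a + b)) by (apply tri_mono; lia). rewrite tri_S in *; lia. }
  rewrite H in E; lia.
Qed.

(* The successor of a pair in the enumeration of [nat * nat] by [npair]; it is what one
   iteration of the [Unpair] loop computes. *)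
Definition succ_pair (p : nat * nat) : nat * nat :=
  match p with (0, b) => (S b, 0) | (S a, b) => (a, S b) end.

Fixpoint iter_succ_pair (k : nat) (p : nat * nat) : nat * nat :=
  match k with 0 => p | S k => iter_succ_pair k (succ_pair p) end.

Lemma npair_succ_pair p : npair (fst (succ_pair p)) (snd (succ_pair p)) = S (npair (fst p) (snd p)).
Proof.
  destruct p as [[|a] b]; simpl; rewrite !npair_tri.
  - rewrite !Nat.add_0_r; simpl; rewrite tri_S; lia.
  - replace (a + S b) with (S a + b) by lia; lia.
Qed.

Lemma npair_iter_succ_pair k : forall p,
  npair (fst (iter_succ_pair k p)) (snd (iter_succ_pair k p)) = npair (fst p) (snd p) + k.
Proof. induction k; intros p; simpl; auto. rewrite IHk, npair_succ_pair; lia. Qed.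

Lemma steps_unpair k : forall a b K, steps machine (Unpair (num k) (num a) (num b) K)
  (Unpair (num 0) (num (fst (iter_succ_pair k (a, b)))) (num (snd (iter_succ_pair k (a, b)))) K).
Proof.
  induction k; intros a b K; simpl; [constructor|].
  destruct a.
  - by_rule unpair_diag; apply (IHk (S b) 0).
  - by_rule unpair_next; apply (IHk a (S b)).
Qed.

Fixpoint tree_code (t : tree) : nat :=
  match t with Lf => 0 | Nd a b => S (npair (tree_code a) (tree_code b)) end.

Lemma steps_decode t : forall K, steps machine (Decode (num (tree_code t)) K) (Ret t K).
Proof.
  induction t as [|a IHa b IHb]; intros K; simpl; [by_rule decode_0; constructor|].
  by_rule decode_S. eapply steps_trans; [apply (steps_unpair _ 0 0)|].
  assert (E := npair_iter_succ_pair (npair (tree_code a) (tree_code b)) (0, 0)).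
  destruct (iter_succ_pair _ (0, 0)) as [a' b']; simpl in *.
  assert (E' : npair a' b' = npair (tree_code a) (tree_code b)) by (rewrite E; lia).
  apply npair_inj in E' as [-> ->].
  by_rule unpair_done. eapply steps_trans; [apply IHa|].
  by_rule ret_decL. eapply steps_trans; [apply IHb|].
  by_rule ret_decR; constructor.
Qed.

Definition start (m : nat) : tree := Decode (num m) (KStart (num m)).

Lemma steps_start q y : reval q [tree_code (rf_tree q)] y ->
  steps machine (start (tree_code (rf_tree q))) (Ret (num y) Lf).
Proof.
  intro H. eapply steps_trans; [apply steps_decode|].
  by_rule ret_start. apply (steps_eval _ _ _ H Lf).
Qed.

Fixpoint rf_const (k : nat) : rf := match k with 0 => rZero | S k => rComp rSucc [rf_const k] end.

Lemma reval_const k xs : reval (rf_const k) xs k.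
Proof. induction k; simpl; repeat econstructor; eauto. Qed.

Lemma reval_proj i xs y : nth i xs 0 = y -> reval (rProj i) xs y.
Proof. intros <-; constructor. Qed.

Lemma reval_comp1 g h xs y z : reval h xs y -> reval g [y] z -> reval (rComp g [h]) xs z.
Proof. intros; repeat econstructor; eauto. Qed.

Lemma reval_comp2 g h1 h2 xs y1 y2 z :
  reval h1 xs y1 -> reval h2 xs y2 -> reval g [y1; y2] z -> reval (rComp g [h1; h2]) xs z.
Proof. intros; repeat econstructor; eauto. Qed.

Definition rf_add : rf := rPrec (rProj 0) (rComp rSucc [rProj 1]).

Lemma reval_add a b xs : reval rf_add (a :: b :: xs) (a + b).
Proof.
  induction a; simpl; [apply ev_prec0, reval_proj; reflexivity|].
  eapply ev_precS; [exact IHa|]. eapply reval_comp1; [apply reval_proj; reflexivity | constructor].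
Qed.

Definition rf_tri : rf := rPrec rZero (rComp rf_add [rComp rSucc [rProj 0]; rProj 1]).

Lemma reval_tri s xs : reval rf_tri (s :: xs) (tri s).
Proof.
  induction s; [apply ev_prec0; constructor|].
  eapply ev_precS; [exact IHs|]. rewrite tri_S, Nat.add_comm.
  eapply reval_comp2; [| apply reval_proj; reflexivity | apply reval_add].
  eapply reval_comp1; [apply reval_proj; reflexivity | constructor].
Qed.

Definition rf_npair : rf := rComp rf_add [rComp rf_tri [rComp rf_add [rProj 0; rProj 1]]; rProj 1].

Lemma reval_npair a b xs : reval rf_npair (a :: b :: xs) (npair a b).
Proof.
  rewrite npair_tri. eapply reval_comp2; [| apply reval_proj; reflexivity | apply reval_add].
  eapply reval_comp1; [| apply reval_tri].
  eapply reval_comp2; [apply reval_proj; reflexivity .. | apply reval_add].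
Qed.

Definition rf_pair_of (h1 h2 : rf) : rf := rComp rf_npair [h1; h2].

Lemma reval_pair_of h1 h2 xs y1 y2 :
  reval h1 xs y1 -> reval h2 xs y2 -> reval (rf_pair_of h1 h2) xs (npair y1 y2).
Proof. intros; eapply reval_comp2; eauto using reval_npair. Qed.

Definition rf_succ_of (h : rf) : rf := rComp rSucc [h].

Lemma reval_succ_of h xs y : reval h xs y -> reval (rf_succ_of h) xs (S y).
Proof. intros; eapply reval_comp1; eauto; constructor. Qed.

Definition rf_enc2 (h1 h2 : rf) : rf :=
  rf_succ_of (rf_pair_of h1 (rf_succ_of (rf_pair_of h2 (rf_const 0)))).

Lemma reval_enc2 h1 h2 xs y1 y2 :
  reval h1 xs y1 -> reval h2 xs y2 -> reval (rf_enc2 h1 h2) xs (enc_list [y1; y2]).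
Proof.
  intros; apply reval_succ_of, reval_pair_of, reval_succ_of, reval_pair_of; auto using reval_const.
Qed.

Definition rf_tapp_code (k : nat) (h1 h2 : rf) : rf :=
  rf_pair_of (rf_const 1) (rf_pair_of (rf_const k) (rf_enc2 h1 h2)).

Lemma reval_tapp_code k h1 h2 xs y1 y2 : reval h1 xs y1 -> reval h2 xs y2 ->
  reval (rf_tapp_code k h1 h2) xs (npair 1 (npair k (enc_list [y1; y2]))).
Proof. intros; apply reval_pair_of, reval_pair_of, reval_enc2; auto using reval_const. Qed.

(* Given a program [hp] computing the code of a closed term, [rf_tsubst_code d hp t] computes
   the code of [t] with that term substituted for the variable [d] (cf. [upn d (inst _)]). *)
Fixpoint rf_tsubst_code (d : nat) (hp : rf) (t : tm) : rf :=
  match t with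
  | tvar i =>
      if i <? d then rf_const (npair 0 i) else if i =? d then hp else rf_const (npair 0 (i - 1))
  | tapp f args =>
      match f return (Fin.t (fn_ar SeqSig f) -> rf) -> rf with
      | Fe => fun _ => rf_const (npair 1 (npair 0 0))
      | Fcons => fun a => rf_tapp_code 1 (a Fin.F1) (a (Fin.FS Fin.F1))
      | Fconc => fun a => rf_tapp_code 2 (a Fin.F1) (a (Fin.FS Fin.F1))
      end (fun i => rf_tsubst_code d hp (args i))
  end.

Fixpoint rf_fsubst_code (d : nat) (hp : rf) (p : fm) : rf :=
  match p with
  | fbot => rf_const (npair 0 0)
  | feq s t => rf_pair_of (rf_const 1) (rf_pair_of (rf_tsubst_code d hp s) (rf_tsubst_code d hp t))
  | frel R _ => match R with end
  | fimp p q => rf_pair_of (rf_const 2) (rf_pair_of (rf_fsubst_code d hp p) (rf_fsubst_code d hp q))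
  | fall p => rf_pair_of (rf_const 3) (rf_fsubst_code (S d) hp p)
  end.

Lemma upn_inst_eq d c : upn d (inst SeqSig (tree_tm c)) d = tree_tm c.
Proof. replace d with (0 + d) at 2 by lia. rewrite upn_ge. apply liftn_tree_tm. Qed.

Lemma upn_inst_gt d u i : d < i -> upn d (inst SeqSig u) i = tvar (i - 1).
Proof.
  intro H. replace i with ((i - d) + d) at 1 by lia. rewrite upn_ge.
  destruct (i - d) eqn:E; [lia|]. unfold liftn; simpl; f_equal; lia.
Qed.

Lemma reval_tsubst_code d hp c xs t : reval hp xs (tcode (tree_tm c)) ->
  reval (rf_tsubst_code d hp t) xs (tcode (tsubst (upn d (inst SeqSig (tree_tm c))) t)).
Proof.
  intro Hh. induction t as [i|f args IH] using term_nested_ind; simpl.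
  - destruct (Nat.ltb_spec i d); [rewrite upn_lt by auto; apply reval_const|].
    destruct (Nat.eqb_spec i d); [subst; now rewrite upn_inst_eq|].
    rewrite upn_inst_gt by lia; apply reval_const.
  - destruct f; [exact (reval_const (npair 1 (npair 0 0)) xs) | apply reval_tapp_code; auto ..].
Qed.

Lemma reval_fsubst_code hp c xs p : reval hp xs (tcode (tree_tm c)) -> forall d,
  reval (rf_fsubst_code d hp p) xs (fcode (fsubst (upn d (inst SeqSig (tree_tm c))) p)).
Proof.
  intro Hh. induction p; intro d; cbn [rf_fsubst_code fsubst fcode];
    auto using reval_const, reval_pair_of, reval_tsubst_code; destruct R.
Qed.

Definition rf_num_code : rf :=
  rPrec (rf_const (npair 1 (npair 0 0)))
        (rf_tapp_code 1 (rProj 1) (rf_const (npair 1 (npair 0 0)))).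

Lemma reval_num_code m xs : reval rf_num_code (m :: xs) (tcode (tree_tm (num m))).
Proof.
  induction m; [apply ev_prec0, reval_const|].
  eapply ev_precS; [exact IHm|].
  apply reval_tapp_code; [apply reval_proj; reflexivity | apply reval_const].
Qed.

(** * The diagonal sentence *)

Lemma tbounded_liftn n k t : tbounded SeqSig n t -> tbounded SeqSig (n + k) (liftn k t).
Proof. intro H. eapply tbounded_tsubst; eauto. intros i Hi; simpl; lia. Qed.

Lemma tbounded_tree_tm n c : tbounded SeqSig n (tree_tm c).
Proof. induction c; simpl; auto using tbounded_te, tbounded_tcons. Qed.

Lemma tbounded_pat_tm n p : (forall i, In i (pvars p) -> i < n) -> tbounded SeqSig n (pat_tm p).
Proof.
  induction p; simpl; intros H; [apply tbounded_te | | apply H; now left].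
  apply tbounded_tcons; [apply IHp1 | apply IHp2]; intros; apply H, in_or_app; auto.
Qed.

Lemma fbounded_exn k : forall n (p : fm), fbounded (n + k) p -> fbounded n (exn k p).
Proof.
  induction k; intros n p H; simpl; [now rewrite Nat.add_0_r in H|].
  apply IHk; simpl. now rewrite <- plus_n_Sm in H.
Qed.

Lemma fbounded_Disj n (ps : list fm) : (forall p, In p ps -> fbounded n p) -> fbounded n (Disj ps).
Proof. induction ps; simpl; intros; auto; repeat split; auto. Qed.

Lemma fbounded_step_fm n rs b a : forallb wf_rule rs = true ->
  tbounded SeqSig n b -> tbounded SeqSig n a -> fbounded n (step_fm rs b a).
Proof.
  intros Hw Hb Ha. apply fbounded_Disj. intros p Hp. apply in_map_iff in Hp as [r [<- Hr]].
  rewrite forallb_forall in Hw. destruct (wf_rule_spec r (Hw r Hr)) as [_ [A B]].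
  apply fbounded_exn; simpl; repeat split; try apply tbounded_liftn; auto;
    apply tbounded_pat_tm; intros i Hi; [specialize (A i Hi) | specialize (A i (B i Hi))]; lia.
Qed.

Lemma fbounded_reaches_fm n rs H I : forallb wf_rule rs = true -> tbounded SeqSig n I ->
  fbounded n (reaches_fm rs H I).
Proof.
  intros Hw HI.
  assert (HX : tbounded SeqSig (S n) (tcons (tvar 0) (liftn 1 I))).
  { apply tbounded_tcons; [simpl; lia|]. rewrite <- Nat.add_1_r. now apply tbounded_liftn. }
  assert (Hl : forall k, tbounded SeqSig (S n + k) (liftn k (tcons (tvar 0) (liftn 1 I))))
    by (intro; now apply tbounded_liftn).
  unfold reaches_fm, valid_fm, first_fm, fex, fand, fneg; simpl; repeat split.
  - replace (S (S (S (S (S n))))) with (S n + 4) by lia; apply Hl.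
  - apply tbounded_tconc; [repeat apply tbounded_tcons|]; simpl; lia.
  - apply fbounded_step_fm; auto; simpl; lia.
  - replace (S (S (S n))) with (S n + 2) by lia; apply Hl.
  - apply tbounded_tconc; [apply tbounded_tcons; [apply tbounded_te|]|]; simpl; lia.
  - simpl; lia.
  - apply tbounded_tree_tm.
Qed.

Definition halted (y : nat) : tree := Ret (num y) Lf.

(* [start] with both occurrences of its argument replaced by the free variable 0. *)
Definition start_tm : tm :=
  tcons (tree_tm (num 4)) (tcons (tvar 0) (tcons (tree_tm (num 7)) (tvar 0))).

Definition diag_fm : fm := reaches_fm machine (halted 0) start_tm.

Definition diag (m : nat) : fm := fsubst (inst SeqSig (tree_tm (num m))) diag_fm.

Lemma diag_eq m : diag m = reaches_fm machine (halted 0) (tree_tm (start m)).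
Proof.
  unfold diag, diag_fm. rewrite fsubst_reaches_fm by apply machine_good. f_equal.
  unfold start_tm; now tsimp.
Qed.

Lemma diag_sentence m : sentence (diag m).
Proof.
  rewrite diag_eq. apply fbounded_reaches_fm; [apply machine_good | apply tbounded_tree_tm].
Qed.

Definition rf_diag : rf := rf_fsubst_code 0 rf_num_code diag_fm.

Lemma reval_diag m : reval rf_diag [m] (fcode (diag m)).
Proof. exact (reval_fsubst_code rf_num_code (num m) [m] diag_fm (reval_num_code m []) 0). Qed.

Lemma seq_ctx_SeqAxList : seq_ctx SeqAxList.
Proof. intros x Hx; exact Hx. Qed.

Lemma proves_SeqAxList (T : theory SeqSig) q :
  (forall p, SeqAx p -> proves T p) -> pr SeqAxList q -> proves T q.
Proof.
  intros HT. apply proves_of_prv. intros a Ha. apply HT.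
  repeat destruct Ha as [<-|Ha]; unfold SeqAx; tauto.
Qed.

Theorem Seq_essentially_undecidable : essentially_undecidable SeqAx.
Proof.
  intros T _ HT Hcons [c Hc].
  set (q := rComp c [rf_diag]); set (m := tree_code (rf_tree q)).
  destruct (Hc (diag m) (diag_sentence m)) as [H1 H0].
  assert (Hrun : forall y, reval c [fcode (diag m)] y ->
            exists l, run machine (start m :: l) /\ last (start m :: l) Lf = halted y).
  { intros y Hy. apply steps_run, steps_start. eapply reval_comp1; [apply reval_diag | exact Hy]. }
  destruct (classic (proves T (diag m))) as [Hp|Hn].
  - destruct (Hrun 1 (proj2 H1 Hp)) as [l [Hl Hlast]].
    apply (proves_contradiction T (diag m)); auto.
    apply proves_SeqAxList; auto. rewrite diag_eq.
    apply prv_not_reaches_fm with l; auto using seq_ctx_SeqAxList, machine_good.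
    + now rewrite Hlast.
    + intros d Hd ->.
      apply (run_not_last_step _ _ Hl (halted 0) Hd); [now rewrite Hlast | reflexivity].
  - destruct (Hrun 0 (proj2 H0 Hn)) as [l [Hl Hlast]].
    apply Hn, proves_SeqAxList; auto. rewrite diag_eq.
    apply prv_reaches_fm with l; auto using seq_ctx_SeqAxList, machine_good.
Qed.

(** * Sequentiality *)

Definition Mem (x y : tm) : fm :=
  fex (fex (feq (liftn 2 y) (tconc (tcons (tvar 1) (liftn 2 x)) (tvar 0)))).

Definition mem_fm : fm := fex (fex (feq (tvar 3) (tconc (tcons (tvar 1) (tvar 2)) (tvar 0)))).

Lemma liftn2_sh2 t : liftn 2 t = sh2 t.
Proof.
  unfold liftn, sh2; rewrite tsubst_comp; apply tsubst_ext; intro n.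
  simpl; unfold Defs.shift; f_equal; lia.
Qed.

Lemma fsubst_Mem s x y : fsubst s (Mem x y) = Mem (tsubst s x) (tsubst s y).
Proof.
  unfold Mem. change (fsubst s (fex (fex ?B))) with (fex (fex (fsubst (upn 2 s) B))).
  cbn [fsubst]. rewrite tsubst_tconc, tsubst_tcons, !upn_liftn; cbn [tsubst].
  now rewrite !upn_lt by lia.
Qed.

Lemma fsubst_for s (p q : fm) : fsubst s (for_ p q) = for_ (fsubst s p) (fsubst s q).
Proof. reflexivity. Qed.

Lemma fsubst_sh2_Mem x y : fsubst sh (fsubst sh (Mem x y)) = Mem (sh2 x) (sh2 y).
Proof. now rewrite !fsubst_Mem. Qed.

Lemma tr_mem a b : tr mem_fm (mem a b) = Mem (tvar a) (tvar b).
Proof.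
  change (tr mem_fm (mem a b)) with
    (fsubst (fun n => match n with 0 => tvar a | 1 => tvar b | _ => tvar 0 end) mem_fm).
  unfold mem_fm, Mem. change (fsubst ?s (fex (fex ?B))) with (fex (fex (fsubst (upn 2 s) B))).
  cbn [fsubst]. rewrite tsubst_tconc, tsubst_tcons. unfold liftn; simpl.
  now rewrite !Nat.add_succ_r, !Nat.add_0_r.
Qed.

Lemma prv_MemI G x y a w : pr G (feq y (tconc (tcons a x) w)) -> pr G (Mem x y).
Proof.
  intro H. rewrite <- fsubst_id. unfold Mem.
  apply (prv_exI_at _ _ _ a), (prv_exI_at _ _ _ w). cbn [fsubst].
  rewrite tsubst_tconc, tsubst_tcons, !tsubst_scons_liftn, !liftn_0, !tsubst_id. exact H.
Qed.

Lemma prv_MemE G x y r : pr G (Mem x y) ->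
  pr (feq (sh2 y) (tconc (tcons (tvar 1) (sh2 x)) (tvar 0)) :: lift2 G) (fsubst sh (fsubst sh r)) ->
  pr G r.
Proof.
  intros H1 H2. eapply prv_exE; [exact H1|]. eapply prv_exE; [apply prv_hd|].
  rewrite !liftn2_sh2. eapply prv_weaken; [exact H2|]. unfold lift2; solve_incl.
Qed.

Lemma prv_Mem_tcons_r G x y : seq_ctx G -> pr G (Mem y (tcons x y)).
Proof. intro HG. apply prv_MemI with x te, prv_eq_sym, prv_conc_e, HG. Qed.

Lemma prv_Mem_tcons_l G u x y : seq_ctx G -> pr G (Mem u x) -> pr G (Mem u (tcons x y)).
Proof.
  intros HG H. eapply prv_MemE; [exact H|]. rewrite fsubst_sh2_Mem.
  set (G2 := _ :: lift2 G). assert (HG2 : seq_ctx G2) by now apply seq_ctx_cons, seq_ctx_lift2.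
  apply prv_MemI with (tvar 1) (tcons (tvar 0) (sh2 y)). rewrite sh2_tcons.
  eapply prv_eq_trans; [apply prv_tcons_congr; [apply prv_hd | apply P_refl]|].
  apply prv_eq_sym, prv_conc_cons, HG2.
Qed.

Lemma prv_Mem_tcons_inv G u x y : seq_ctx G ->
  pr G (Mem u (tcons x y)) -> pr G (for_ (Mem u x) (feq u y)).
Proof.
  intros HG H. eapply prv_MemE; [exact H|].
  rewrite !fsubst_for, fsubst_sh2_Mem. cbn [fsubst]. fold (sh2 u) (sh2 y).
  set (G2 := _ :: lift2 G). assert (HG2 : seq_ctx G2) by now apply seq_ctx_cons, seq_ctx_lift2.
  assert (Hx : pr G2 (feq (tcons (sh2 x) (sh2 y)) (tconc (tcons (tvar 1) (sh2 u)) (tvar 0)))).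
  { rewrite <- sh2_tcons; apply prv_hd. }
  apply (prv_seq_cases G2 (tvar 0)); auto.
  - apply prv_orI2, prv_eq_sym.
    apply (prv_cons_inj _ (sh2 x) (sh2 y) (tvar 1) (sh2 u)); [now apply seq_ctx_cons|].
    eapply prv_eq_trans; [apply prv_cons, Hx|].
    eapply prv_eq_trans; [apply prv_tconc_congr; [apply P_refl | apply prv_hd]|].
    apply prv_conc_e; now apply seq_ctx_cons.
  - set (G3 := _ :: lift2 G2). assert (HG3 : seq_ctx G3) by now apply seq_ctx_cons, seq_ctx_lift2.
    rewrite !fsubst_for, fsubst_sh2_Mem. apply prv_orI1.
    assert (Hx3 := prv_lift2 _ _ Hx). tsimp_in Hx3.
    apply (prv_cons _ _ (feq (sh2 (tvar 0)) (tcons (tvar 1) (tvar 0)))) in Hx3. fold G3 in Hx3.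
    assert (X : pr G3 (feq (tcons (sh2 (sh2 x)) (sh2 (sh2 y)))
                           (tcons (tconc (tcons (tvar 3) (sh2 (sh2 u))) (tvar 1)) (tvar 0)))).
    { eapply prv_eq_trans; [exact Hx3|].
      eapply prv_eq_trans; [apply prv_tconc_congr; [apply P_refl | apply prv_hd]|].
      apply prv_conc_cons, HG3. }
    apply prv_cons_inj in X as [X _]; auto. now apply prv_MemI with (tvar 3) (tvar 1).
Qed.

Lemma prv_adjunction G u x y : seq_ctx G ->
  pr G (fiff (Mem u (tcons x y)) (for_ (Mem u x) (feq u y))).
Proof.
  intro HG. apply prv_andI; apply P_impI.
  - apply prv_Mem_tcons_inv, prv_hd; now apply seq_ctx_cons.
  - eapply prv_orE; [apply prv_hd | |].
    + apply prv_Mem_tcons_l, prv_hd; now do 2 apply seq_ctx_cons.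
    + set (P := Mem (tvar 0) (tcons (tsubst sh x) (tsubst sh y))).
      replace (Mem u (tcons x y)) with (fsubst (inst SeqSig u) P)
        by (unfold P; rewrite fsubst_Mem; now tsimp).
      apply P_leib with y; [apply prv_eq_sym, prv_hd|].
      unfold P; rewrite fsubst_Mem; tsimp. apply prv_Mem_tcons_r; now do 2 apply seq_ctx_cons.
Qed.

Theorem Seq_sequential : sequential SeqAx.
Proof.
  exists mem_fm; split.
  { unfold mem_fm, fex, fneg; simpl; repeat split;
      repeat (apply tbounded_tconc || apply tbounded_tcons); simpl; lia. }
  intros A [-> | ->]; apply proves_SeqAxList; auto using proves_axiom.
  - change (tr mem_fm AST_empty) with (fex (fall (fneg (tr mem_fm (mem 0 1))))).
    rewrite tr_mem. apply (prv_exI _ _ te).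
    change (fsubst ?s (fall (fneg ?p))) with (fall (fneg (fsubst (up SeqSig s) p))).
    rewrite fsubst_Mem; tsimp. apply P_allI, P_impI. eapply prv_MemE; [apply prv_hd|].
    eapply prv_conc_cons_neq_e; [now apply seq_ctx_cons, seq_ctx_lift2, seq_ctx_cons, seq_ctx_map|].
    apply prv_eq_sym. unfold sh2; rewrite !tsubst_te. apply prv_hd.
  - change (tr mem_fm AST_adj) with (fall (fall (fex (fall
      (fiff (tr mem_fm (mem 0 1)) (for_ (tr mem_fm (mem 0 3)) (feq (tvar 0) (tvar 2)))))))).
    rewrite !tr_mem. apply P_allI, P_allI, (prv_exI _ _ (tcons (tvar 1) (tvar 0))).
    change (fsubst ?s (fall (fiff ?A (for_ ?B ?C)))) with
      (fall (fiff (fsubst (up SeqSig s) A)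
                  (for_ (fsubst (up SeqSig s) B) (fsubst (up SeqSig s) C)))).
    rewrite !fsubst_Mem; tsimp. apply P_allI, prv_adjunction.
    repeat apply seq_ctx_map; apply seq_ctx_SeqAxList.
Qed.

Theorem theorem4 : sequential SeqAx /\ essentially_undecidable SeqAx.
Proof. exact (conj Seq_sequential Seq_essentially_undecidable). Qed.
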